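(* Let $n\ge1$ be fixed, $\Theta_h^{n-1}\in W_h$ given, $L\ge L_s$, and let $(\Theta_h^{n,i},\mathbf q_h^{n,i},p_h^{n,i},\mathbf u_h^{n,i})$, $i\ge1$, be the iterates of Problem $P_h^{n,i}$ started from $\Theta_h^{n,0}=\Theta_h^{n-1}$. Assume (A1)–(A5). Then there exist constants $K>0$ and $C_{\Omega,d}>0$, depending only on $L$, $a_\star,a^\star$, $M_{\mathbf u}$, $\sup|f_w|$, the Lipschitz constants of $a,f_w,\mathbf f_1,f_2,\mathbf f_3$ and on $\Omega,d$, but not on $h$, $\tau$ or $i$, such that if $\tau\le 1/K$ then for all $i\ge2$ $$\|\Theta_h^{n,i}-\Theta_h^{n,i-1}\|^2\le\frac{3C_{\Omega,d}^2L}{3C_{\Omega,d}^2L+\tau}\,\|\Theta_h^{n,i-1}-\Theta_h^{n,i-2}\|^2,$$ so the iteration converges linearly; moreover $\mathbf q_h^{n,i},p_h^{n,i},\mathbf u_h^{n,i}$ converge as well and the limit is a solution of Problem $P_h^n$.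
   Context: Let $\Omega\subset\mathbb R^d$ be a bounded polygonal domain with Lipschitz boundary, $\tau>0$ a time step, $\langle\cdot,\cdot\rangle$ the $L^2(\Omega)$ inner product, $\|\cdot\|$ the $L^2$ norm. Given $s:\mathbb R\to[0,1]$, $a,f_w,f_2:\mathbb R\to\mathbb R$, $\mathbf f_1,\mathbf f_3:\mathbb R\to\mathbb R^d$ with: (A1) $s$ monotonically increasing and Lipschitz with constant $L_s$; (A2) $a$ Lipschitz, $0<a_\star\le a\le a^\star<\infty$; (A3) $\mathbf f_1,f_2,\mathbf f_3,f_w$ Lipschitz, $f_w$ bounded; (A4) there is $M_{\mathbf u}$ with $\|\mathbf u_h^{n,i}\|_{L^\infty}\le M_{\mathbf u}$ and $\|\mathbf u_h^n\|_{L^\infty}\le M_{\mathbf u}$ uniformly in $h$, $i$; (A5) initial datum in $L^2(\Omega)$. $\mathcal T_h$ regular simplicial mesh; $W_h$ piecewise constants; $V_h$ lowest order Raviart–Thomas space $\{\mathbf q\in H(\mathrm{div};\Omega):\mathbf q|_T=\mathbf a_T+b_Tx\}$. $C_{\Omega,d}$ denotes a constant, independent of $h$, such that for every $w_h\in W_h$ there is $\mathbf v_h\in V_h$ with $\nabla\cdot\mathbf v_h=w_h$ and $\|\mathbf v_h\|\le C_{\Omega,d}\|w_h\|$. Notation $s_h^{k}=s(\Theta_h^k)$, $s_h^{n,i}=s(\Theta_h^{n,i})$. Problem $P_h^n$: find $\Theta_h^n,p_h^n\in W_h$, $\mathbf q_h^n,\mathbf u_h^n\in V_h$ such that for all $w_h\in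 W_h$, $\mathbf v_h\in V_h$: $\langle s_h^n-s_h^{n-1},w_h\rangle+\tau\langle\nabla\cdot\mathbf q_h^n,w_h\rangle=0$; $\langle\mathbf q_h^n,\mathbf v_h\rangle-\langle\Theta_h^n,\nabla\cdot\mathbf v_h\rangle-\langle f_w(s_h^n)\mathbf u_h^n,\mathbf v_h\rangle=\langle\mathbf f_1(s_h^n),\mathbf v_h\rangle$; $\langle\nabla\cdot\mathbf u_h^n,w_h\rangle=\langle f_2(s_h^n),w_h\rangle$; $\langle a(s_h^n)\mathbf u_h^n,\mathbf v_h\rangle-\langle p_h^n,\nabla\cdot\mathbf v_h\rangle+\langle\mathbf f_3(s_h^n),\mathbf v_h\rangle=0$. Problem $P_h^{n,i}$ (L-scheme): given $\Theta_h^{n,i-1}\in W_h$, find $\Theta_h^{n,i},p_h^{n,i}\in W_h$, $\mathbf q_h^{n,i},\mathbf u_h^{n,i}\in V_h$ such that for all $w_h\in W_h$, $\mathbf v_h\in V_h$: $\langle L(\Theta_h^{n,i}-\Theta_h^{n,i-1})+s_h^{n,i-1},w_h\rangle+\tau\langle\nabla\cdot\mathbf q_h^{n,i},w_h\rangle=\langle s_h^{n-1},w_h\rangle$; $\langle\mathbf q_h^{n,i},\mathbf v_h\rangle-\langle\Theta_h^{n,i},\nabla\cdot\mathbf v_h\rangle-\langle f_w(s_h^{n,i-1})\mathbf u_h^{n,i},\mathbf v_h\rangle=\langle\mathbf f_1(s_h^{n,i-1}),\mathbf v_h\rangle$; $\langle\nabla\cdot\mathbf u_h^{n,i},w_h\rangle=\langle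 f_2(s_h^{n,i-1}),w_h\rangle$; $\langle a(s_h^{n,i-1})\mathbf u_h^{n,i},\mathbf v_h\rangle-\langle p_h^{n,i},\nabla\cdot\mathbf v_h\rangle+\langle\mathbf f_3(s_h^{n,i-1}),\mathbf v_h\rangle=0$. *)

From Stdlib Require Import Arith Reals Lra Lia.
Open Scope R_scope.

(** * Finite-dimensional encoding of the lowest-order mixed FE setting.
    Points of R^d are functions [nat -> R]; only coordinates [c < d] matter. *)

Definition pt := nat -> R.

Fixpoint sumR (n : nat) (f : nat -> R) : R :=
  match n with O => 0 | S m => sumR m f + f m end.

Definition dot (d : nat) (x y : pt) : R := sumR d (fun c => x c * y c).
Definition enorm (d : nat) (x : pt) : R := sqrt (dot d x x).
Definition peq (d : nat) (x y : pt) : Prop := forall c, (c < d)%nat -> x c = y c.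

Fixpoint det (n : nat) (M : nat -> nat -> R) : R :=
  match n with
  | O => 1
  | S m => sumR (S m) (fun j =>
             (-1) ^ j * M O j *
             det m (fun r c => M (S r) (if Nat.ltb c j then c else S c)))
  end.

(** A simplex in R^d is given by its d+1 vertices [T 0, ..., T d]. *)
Definition simplex := nat -> pt.

Definition vol (d : nat) (T : simplex) : R :=
  Rabs (det d (fun r c => T (S r) c - T O c)) / INR (Factorial.fact d).

Definition in_simplex (d : nat) (T : simplex) (x : pt) : Prop :=
  exists lam : nat -> R,
    (forall j, (j <= d)%nat -> 0 <= lam j) /\ sumR (S d) lam = 1 /\
    forall c, (c < d)%nat -> x c = sumR (S d) (fun j => lam j * T j c).

Definition shared (d : nat) (T T' : simplex) (j : nat) : Prop :=
  exists j', (j' <= d)%nat /\ peq d (T j) (T' j').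

(** A simplicial mesh: [nel] elements, element [k] has vertices [elt k j], j <= d.
    Omega_h is the union of its elements. *)
Record mesh := { nel : nat; elt : nat -> simplex }.

(** Regular (conforming) simplicial mesh: non-degenerate elements, distinct
    elements are distinct simplices and intersect exactly in the convex hull of
    their common vertices (a common sub-simplex / face, or empty). *)
Definition conforming (d : nat) (M : mesh) : Prop :=
  (forall k, (k < nel M)%nat -> 0 < vol d (elt M k)) /\
  (forall k k', (k < nel M)%nat -> (k' < nel M)%nat -> k <> k' ->
     (exists j, (j <= d)%nat /\ ~ shared d (elt M k) (elt M k') j) /\
     forall x, in_simplex d (elt M k) x -> in_simplex d (elt M k') x ->
       exists lam : nat -> R,
         (forall j, (j <= d)%nat -> 0 <= lam j) /\
         (forall j, (j <= d)%nat -> ~ shared d (elt M k) (elt M k') j -> lam j = 0) /\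
         sumR (S d) lam = 1 /\
         forall c, (c < d)%nat -> x c = sumR (S d) (fun j => lam j * elt M k j c)).

(** W_h: piecewise constants, value [w k] on element k. *)
Definition W := nat -> R.

(** Broken lowest-order Raviart-Thomas fields: on element k, x |-> a_k + b_k x. *)
Record rt := { rta : nat -> pt; rtb : nat -> R }.

Definition rt_eval (v : rt) (k : nat) (x : pt) : pt :=
  fun c => rta v k c + rtb v k * x c.

Definition rt_sub (v w : rt) : rt :=
  {| rta := fun k c => rta v k c - rta w k c; rtb := fun k => rtb v k - rtb w k |}.

(** Elementwise divergence of a_k + b_k x is d * b_k. *)
Definition divh (d : nat) (v : rt) (k : nat) : R := INR d * rtb v k.

(** V_h = broken RT fields lying in H(div; Omega): the normal component is
    continuous across every interior face (face of element k opposite to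
    its local vertex j0 shared with element k').  [y] ranges over the normals. *)
Definition in_Vh (d : nat) (M : mesh) (v : rt) : Prop :=
  forall k k' j0, (k < nel M)%nat -> (k' < nel M)%nat -> k <> k' -> (j0 <= d)%nat ->
    (forall j, (j <= d)%nat -> j <> j0 -> shared d (elt M k) (elt M k') j) ->
    forall y : pt,
      (forall j j1, (j <= d)%nat -> (j1 <= d)%nat -> j <> j0 -> j1 <> j0 ->
          dot d y (fun c => elt M k j c - elt M k j1 c) = 0) ->
      forall j, (j <= d)%nat -> j <> j0 ->
        dot d y (rt_eval v k (elt M k j)) = dot d y (rt_eval v k' (elt M k j)).

(** Exact integrals over a simplex T:
    - of an affine function f : |T|/(d+1) * sum_j f(T j);
    - of F.G for affine vector fields F, G (via int lam_i lam_j = |T|(1+delta_ij)/((d+1)(d+2))). *)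
Definition int_aff (d : nat) (T : simplex) (f : pt -> R) : R :=
  vol d T / INR (S d) * sumR (S d) (fun j => f (T j)).

Definition int_dot (d : nat) (T : simplex) (F G : pt -> pt) : R :=
  vol d T / (INR (S d) * INR (S (S d))) *
  (sumR (S d) (fun j => dot d (F (T j)) (G (T j))) +
   dot d (fun c => sumR (S d) (fun j => F (T j) c))
         (fun c => sumR (S d) (fun j => G (T j) c))).

Definition ipW (d : nat) (M : mesh) (w1 w2 : W) : R :=
  sumR (nel M) (fun k => vol d (elt M k) * w1 k * w2 k).
Definition ipWdiv (d : nat) (M : mesh) (w : W) (v : rt) : R :=
  sumR (nel M) (fun k => vol d (elt M k) * w k * divh d v k).
Definition ipVw (d : nat) (M : mesh) (g : W) (u v : rt) : R :=
  sumR (nel M) (fun k => g k * int_dot d (elt M k) (rt_eval u k) (rt_eval v k)).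
Definition ipV (d : nat) (M : mesh) (u v : rt) : R := ipVw d M (fun _ => 1) u v.
Definition ipFV (d : nat) (M : mesh) (F : nat -> pt) (v : rt) : R :=
  sumR (nel M) (fun k => int_aff d (elt M k) (fun x => dot d (F k) (rt_eval v k x))).

Definition normW (d : nat) (M : mesh) (w : W) : R := sqrt (ipW d M w w).
Definition normV (d : nat) (M : mesh) (v : rt) : R := sqrt (ipV d M v v).

Definition Linf_le (d : nat) (M : mesh) (v : rt) (m : R) : Prop :=
  forall k x, (k < nel M)%nat -> in_simplex d (elt M k) x -> enorm d (rt_eval v k x) <= m.

Definition div_stable (d : nat) (M : mesh) (C : R) : Prop :=
  forall w : W, exists v : rt, in_Vh d M v /\
    (forall k, (k < nel M)%nat -> divh d v k = w k) /\ normV d M v <= C * normW d M w.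

Definition Wsub (w1 w2 : W) : W := fun k => w1 k - w2 k.

(** Problem P_h^{n,i}: (Th, q, p, u) is the i-th iterate, given the (i-1)-th Thp
    and the previous time level Th0 (= Theta_h^{n-1}). *)
Definition Lscheme_step (d : nat) (M : mesh) (s a fw f2 : R -> R) (f1 f3 : R -> pt)
  (L tau : R) (Th0 Thp : W) (Th : W) (q : rt) (p : W) (u : rt) : Prop :=
  in_Vh d M q /\ in_Vh d M u /\
  let sp : W := fun k => s (Thp k) in
  (forall w : W,
     ipW d M (fun k => L * (Th k - Thp k) + sp k) w + tau * ipWdiv d M w q
     = ipW d M (fun k => s (Th0 k)) w) /\
  (forall v, in_Vh d M v ->
     ipV d M q v - ipWdiv d M Th v - ipVw d M (fun k => fw (sp k)) u v
     = ipFV d M (fun k => f1 (sp k)) v) /\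
  (forall w : W, ipWdiv d M w u = ipW d M (fun k => f2 (sp k)) w) /\
  (forall v, in_Vh d M v ->
     ipVw d M (fun k => a (sp k)) u v - ipWdiv d M p v + ipFV d M (fun k => f3 (sp k)) v = 0).

Definition Ph_n (d : nat) (M : mesh) (s a fw f2 : R -> R) (f1 f3 : R -> pt)
  (tau : R) (Th0 : W) (Th : W) (q : rt) (p : W) (u : rt) : Prop :=
  in_Vh d M q /\ in_Vh d M u /\
  let sn : W := fun k => s (Th k) in
  (forall w : W,
     ipW d M (fun k => sn k - s (Th0 k)) w + tau * ipWdiv d M w q = 0) /\
  (forall v, in_Vh d M v ->
     ipV d M q v - ipWdiv d M Th v - ipVw d M (fun k => fw (sn k)) u v
     = ipFV d M (fun k => f1 (sn k)) v) /\
  (forall w : W, ipWdiv d M w u = ipW d M (fun k => f2 (sn k)) w) /\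
  (forall v, in_Vh d M v ->
     ipVw d M (fun k => a (sn k)) u v - ipWdiv d M p v + ipFV d M (fun k => f3 (sn k)) v = 0).

Definition Lip (f : R -> R) (Lc : R) : Prop :=
  forall x y, Rabs (f x - f y) <= Lc * Rabs (x - y).
Definition LipV (d : nat) (f : R -> pt) (Lc : R) : Prop :=
  forall x y, enorm d (fun c => f x c - f y c) <= Lc * Rabs (x - y).

From Stdlib Require Import Reals Lra Lia Classical IndefiniteDescription.
Open Scope R_scope.

(** Subtract two consecutive L-scheme steps and call [e] the increment of [Theta].
    Testing the mass equation with [e] and the flux equation with the flux increment
    gives an energy inequality in which monotonicity of [s] together with [L >= L_s]
    turns the saturation increment into dissipation ([(s x - s y)^2 <= L (s x - s y)(x - y)]);
    the right-hand sides, which involve the velocity increment, are Lipschitz in the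
    saturation increment by the inf-sup stability of the flow problem and are absorbed
    for [3 L rho^2 tau <= 1].  The discrete inf-sup condition bounds [||e||] by the flux
    increment, which closes the contraction [||e_i||^2 <= 3C^2L/(3C^2L+tau) ||e_(i-1)||^2].
    All other increments are bounded by [||e_(i-1)||], so every coefficient sequence has
    geometrically decaying increments and converges; the equations pass to the limit,
    which therefore solves [P_h^n]. *)

(** * Finite sums and dot products *)

Lemma sumR_ext n f g : (forall k, (k < n)%nat -> f k = g k) -> sumR n f = sumR n g.
Proof.
  induction n as [|n IH]; intros H; simpl; auto.
  rewrite IH, (H n) by (lia || (intros; apply H; lia)). auto.
Qed.

Lemma sumR_add n f g : sumR n (fun k => f k + g k) = sumR n f + sumR n g.
Proof. induction n; simpl; [lra|rewrite IHn; lra]. Qed.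

Lemma sumR_sub n f g : sumR n (fun k => f k - g k) = sumR n f - sumR n g.
Proof. induction n; simpl; [lra|rewrite IHn; lra]. Qed.

Lemma sumR_scal n c f : sumR n (fun k => c * f k) = c * sumR n f.
Proof. induction n; simpl; [lra|rewrite IHn; lra]. Qed.

Lemma sumR_0 n : sumR n (fun _ => 0) = 0.
Proof. induction n; simpl; [lra|rewrite IHn; lra]. Qed.

Lemma sumR_const n c : sumR n (fun _ => c) = INR n * c.
Proof. induction n; simpl sumR; [simpl; lra|rewrite IHn, S_INR; lra]. Qed.

Lemma sumR_le n f g : (forall k, (k < n)%nat -> f k <= g k) -> sumR n f <= sumR n g.
Proof.
  induction n; simpl; intros H; [lra|].
  pose proof (H n ltac:(lia)). pose proof (IHn ltac:(intros; apply H; lia)). lra.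
Qed.

Lemma sumR_ge0 n f : (forall k, (k < n)%nat -> 0 <= f k) -> 0 <= sumR n f.
Proof. intros H. rewrite <- (sumR_0 n). apply sumR_le, H. Qed.

Lemma sumR_single n f k0 : (k0 < n)%nat -> (forall k, (k < n)%nat -> k <> k0 -> f k = 0) ->
  sumR n f = f k0.
Proof.
  induction n; simpl; intros Hk H; [lia|].
  destruct (Nat.eq_dec k0 n) as [->|Hne].
  - rewrite (sumR_ext n f (fun _ => 0)), sumR_0 by (intros; apply H; lia). lra.
  - rewrite IHn, (H n) by (lia || (intros; apply H; lia)). lra.
Qed.

Lemma sumR_term_le n f k0 : (k0 < n)%nat -> (forall k, (k < n)%nat -> 0 <= f k) ->
  f k0 <= sumR n f.
Proof.
  induction n; simpl; intros Hk H; [lia|].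
  pose proof (H n ltac:(lia)).
  destruct (Nat.eq_dec k0 n) as [->|Hne].
  - pose proof (sumR_ge0 n f ltac:(intros; apply H; lia)). lra.
  - pose proof (IHn ltac:(lia) ltac:(intros; apply H; lia)). lra.
Qed.

Lemma sumR_comm n m F :
  sumR n (fun a => sumR m (fun b => F a b)) = sumR m (fun b => sumR n (fun a => F a b)).
Proof.
  induction n; simpl.
  - rewrite sumR_0; auto.
  - rewrite IHn, <- sumR_add. auto.
Qed.

Lemma abs_le_sqrt_mul X A B : 0 <= A -> 0 <= B -> X^2 <= A * B -> Rabs X <= sqrt A * sqrt B.
Proof.
  intros HA HB H. rewrite <- sqrt_mult, <- sqrt_Rsqr_abs by auto.
  apply sqrt_le_1_alt. unfold Rsqr. lra.
Qed.

Lemma sqrt_le_of_le_sqr x a : 0 <= a -> x <= a^2 -> sqrt x <= a.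
Proof.
  intros Ha H. destruct (Rle_or_lt x 0).
  - rewrite sqrt_neg_0; auto.
  - rewrite <- (sqrt_pow2 a) by auto. apply sqrt_le_1_alt; auto.
Qed.

Lemma sqr_add_le_mul X Y P Q p q : 0 <= P -> 0 <= Q -> 0 <= p -> 0 <= q ->
  X^2 <= P * Q -> Y^2 <= p * q -> (X + Y)^2 <= (P + p) * (Q + q).
Proof.
  intros HP HQ Hp Hq HX HY.
  pose proof (abs_le_sqrt_mul X P Q HP HQ HX). pose proof (abs_le_sqrt_mul Y p q Hp Hq HY).
  rewrite <- (pow2_sqrt P), <- (pow2_sqrt Q), <- (pow2_sqrt p), <- (pow2_sqrt q) by auto.
  pose proof (sqrt_pos P). pose proof (sqrt_pos Q). pose proof (sqrt_pos p). pose proof (sqrt_pos q).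
  rewrite <- (pow2_abs (X + Y)).
  apply Rle_trans with ((sqrt P * sqrt Q + sqrt p * sqrt q)^2).
  - apply pow_incr. split; [apply Rabs_pos|]. pose proof (Rabs_triang X Y). lra.
  - pose proof (pow2_ge_0 (sqrt P * sqrt q - sqrt p * sqrt Q)). nra.
Qed.

Lemma sumR_Cauchy_Schwarz n f P Q :
  (forall k, (k < n)%nat -> 0 <= P k /\ 0 <= Q k /\ (f k)^2 <= P k * Q k) ->
  (sumR n f)^2 <= sumR n P * sumR n Q.
Proof.
  induction n; simpl; intros H; [lra|].
  destruct (H n ltac:(lia)) as (HP & HQ & Hf).
  apply sqr_add_le_mul; auto; try (apply sumR_ge0; intros; apply H; lia).
Qed.

Lemma dot_comm d x y : dot d x y = dot d y x.
Proof. unfold dot. apply sumR_ext; intros; ring. Qed.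

Lemma dot_ge0 d x : 0 <= dot d x x.
Proof. unfold dot. apply sumR_ge0; intros. nra. Qed.

Lemma dot_Cauchy_Schwarz d x y : (dot d x y)^2 <= dot d x x * dot d y y.
Proof. unfold dot. apply sumR_Cauchy_Schwarz. intros; repeat split; nra. Qed.

Lemma sqr_coord_le_dot d x c : (c < d)%nat -> (x c)^2 <= dot d x x.
Proof.
  intros. unfold dot. replace ((x c)^2) with (x c * x c) by ring.
  apply (sumR_term_le d (fun c => x c * x c) c); auto. intros; nra.
Qed.

Lemma dot_ext d x x' y y' : peq d x x' -> peq d y y' -> dot d x y = dot d x' y'.
Proof. intros H1 H2. unfold dot. apply sumR_ext; intros. rewrite H1, H2; auto. Qed.

Lemma dot_sub_l d x x' y : dot d (fun c => x c - x' c) y = dot d x y - dot d x' y.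
Proof. unfold dot. rewrite <- sumR_sub. apply sumR_ext; intros; ring. Qed.

Lemma dot_sub_r d x y y' : dot d x (fun c => y c - y' c) = dot d x y - dot d x y'.
Proof. rewrite dot_comm, dot_sub_l, !(dot_comm d x). auto. Qed.

Lemma dot_sum_r d m x G :
  dot d x (fun c => sumR m (fun j => G j c)) = sumR m (fun j => dot d x (G j)).
Proof. unfold dot. rewrite <- sumR_comm. apply sumR_ext; intros. rewrite <- sumR_scal. auto. Qed.

Lemma dot_sum_le d m G :
  dot d (fun c => sumR m (fun j => G j c)) (fun c => sumR m (fun j => G j c))
  <= INR m * sumR m (fun j => dot d (G j) (G j)).
Proof.
  unfold dot at 2. rewrite <- sumR_comm, <- sumR_scal. unfold dot.
  apply sumR_le; intros c Hc.
  pose proof (sumR_Cauchy_Schwarz m (fun j => G j c) (fun _ => 1) (fun j => G j c * G j c)) as H.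
  rewrite sumR_const, Rmult_1_r in H.
  replace (sumR m (fun j => G j c) * sumR m (fun j => G j c)) with ((sumR m (fun j => G j c))^2) by ring.
  apply H. intros; repeat split; nra.
Qed.

(** * Quadrature on a simplex *)

Definition vertex_sum d (T : simplex) (F : pt -> pt) : pt :=
  fun c => sumR (S d) (fun j => F (T j) c).

Definition vertex_dot d (T : simplex) (F G : pt -> pt) : R :=
  sumR (S d) (fun j => dot d (F (T j)) (G (T j))).

Definition quad_weight d (T : simplex) : R := vol d T / (INR (S d) * INR (S (S d))).

Lemma int_dot_vertex d T F G :
  int_dot d T F G = quad_weight d T * (vertex_dot d T F G + dot d (vertex_sum d T F) (vertex_sum d T G)).
Proof. reflexivity. Qed.

Lemma vol_ge0 d T : 0 <= vol d T.
Proof.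
  apply Rle_mult_inv_pos; [apply Rabs_pos|]. apply lt_0_INR, Factorial.lt_O_fact.
Qed.

Lemma quad_weight_ge0 d T : 0 <= quad_weight d T.
Proof.
  apply Rle_mult_inv_pos; [apply vol_ge0|]. apply Rmult_lt_0_compat; apply lt_0_INR; lia.
Qed.

Lemma vertex_dot_ge0 d T F : 0 <= vertex_dot d T F F.
Proof. apply sumR_ge0; intros; apply dot_ge0. Qed.

Lemma int_dot_ge0 d T F : 0 <= int_dot d T F F.
Proof.
  rewrite int_dot_vertex. apply Rmult_le_pos; [apply quad_weight_ge0|].
  pose proof (vertex_dot_ge0 d T F). pose proof (dot_ge0 d (vertex_sum d T F)). lra.
Qed.

Lemma int_dot_Cauchy_Schwarz d T F G : (int_dot d T F G)^2 <= int_dot d T F F * int_dot d T G G.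
Proof.
  rewrite !int_dot_vertex. pose proof (quad_weight_ge0 d T) as Hw.
  set (w := quad_weight d T) in *.
  assert (H : (vertex_dot d T F G + dot d (vertex_sum d T F) (vertex_sum d T G))^2 <=
    (vertex_dot d T F F + dot d (vertex_sum d T F) (vertex_sum d T F)) *
    (vertex_dot d T G G + dot d (vertex_sum d T G) (vertex_sum d T G))).
  { apply sqr_add_le_mul; try apply vertex_dot_ge0; try apply dot_ge0; try apply dot_Cauchy_Schwarz.
    apply sumR_Cauchy_Schwarz; intros; repeat split; try apply dot_ge0; apply dot_Cauchy_Schwarz. }
  rewrite Rpow_mult_distr.
  replace (w * _ * (w * _)) with (w^2 * ((vertex_dot d T F F + dot d (vertex_sum d T F) (vertex_sum d T F)) *
    (vertex_dot d T G G + dot d (vertex_sum d T G) (vertex_sum d T G)))) by ring.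
  apply Rmult_le_compat_l; [apply pow2_ge_0|exact H].
Qed.

Lemma int_dot_ext d T F F' G G' :
  (forall j, (j <= d)%nat -> peq d (F (T j)) (F' (T j))) ->
  (forall j, (j <= d)%nat -> peq d (G (T j)) (G' (T j))) ->
  int_dot d T F G = int_dot d T F' G'.
Proof.
  intros H1 H2. rewrite !int_dot_vertex. f_equal. f_equal.
  - apply sumR_ext; intros. apply dot_ext; [apply H1|apply H2]; lia.
  - apply dot_ext; intros c Hc; apply sumR_ext; intros; [apply H1|apply H2]; auto; lia.
Qed.

Lemma int_dot_comm d T F G : int_dot d T F G = int_dot d T G F.
Proof.
  rewrite !int_dot_vertex, (dot_comm d (vertex_sum d T F)). unfold vertex_dot.
  rewrite (sumR_ext _ _ (fun j => dot d (G (T j)) (F (T j)))) by (intros; apply dot_comm). auto.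
Qed.

Lemma int_dot_sub_l d T F F' G :
  int_dot d T (fun x c => F x c - F' x c) G = int_dot d T F G - int_dot d T F' G.
Proof.
  rewrite !int_dot_vertex. unfold vertex_dot.
  rewrite (sumR_ext _ _ (fun j => dot d (F (T j)) (G (T j)) - dot d (F' (T j)) (G (T j))))
    by (intros; apply dot_sub_l).
  rewrite sumR_sub, (dot_ext d _ (fun c => vertex_sum d T F c - vertex_sum d T F' c) _ (vertex_sum d T G))
    by (intros c Hc; unfold vertex_sum; try rewrite sumR_sub; auto).
  rewrite dot_sub_l. ring.
Qed.

Lemma int_dot_sub_r d T F G G' :
  int_dot d T F (fun x c => G x c - G' x c) = int_dot d T F G - int_dot d T F G'.
Proof. rewrite int_dot_comm, int_dot_sub_l, !(int_dot_comm d T F). auto. Qed.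

Lemma int_dot_le_vol d T F m :
  0 <= m -> (forall j, (j <= d)%nat -> dot d (F (T j)) (F (T j)) <= m) ->
  int_dot d T F F <= vol d T * m.
Proof.
  intros Hm H. rewrite int_dot_vertex. unfold quad_weight.
  assert (H1 : vertex_dot d T F F <= INR (S d) * m).
  { unfold vertex_dot. rewrite <- sumR_const. apply sumR_le; intros; apply H; lia. }
  assert (H2 : dot d (vertex_sum d T F) (vertex_sum d T F) <= INR (S d) * (INR (S d) * m)).
  { eapply Rle_trans; [apply dot_sum_le|]. apply Rmult_le_compat_l; [apply pos_INR|exact H1]. }
  pose proof (vol_ge0 d T). pose proof (lt_0_INR (S d) ltac:(lia)).
  rewrite (S_INR (S d)).
  set (n := INR (S d)) in *. set (V := vol d T) in *.
  apply Rle_trans with (V / (n * (n + 1)) * (n * m + n * (n * m))).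
  - apply Rmult_le_compat_l; [apply Rle_mult_inv_pos; nra|lra].
  - right. field. lra.
Qed.

Lemma int_aff_dot_sqr_le d T (Fv : pt) G :
  (int_aff d T (fun x => dot d Fv (G x)))^2 <= vol d T * dot d Fv Fv * int_dot d T G G.
Proof.
  unfold int_aff. rewrite <- (dot_sum_r d (S d) Fv (fun j => G (T j))). fold (vertex_sum d T G).
  rewrite int_dot_vertex. unfold quad_weight.
  pose proof (dot_sum_le d (S d) (fun j => G (T j))) as HA.
  change (dot d (vertex_sum d T G) (vertex_sum d T G) <= INR (S d) * vertex_dot d T G G) in HA.
  pose proof (dot_Cauchy_Schwarz d Fv (vertex_sum d T G)) as HX.
  pose proof (vol_ge0 d T). pose proof (dot_ge0 d Fv). pose proof (dot_ge0 d (vertex_sum d T G)).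
  pose proof (lt_0_INR (S d) ltac:(lia)).
  rewrite (S_INR (S d)).
  set (n := INR (S d)) in *. set (V := vol d T) in *.
  set (A := dot d (vertex_sum d T G) (vertex_sum d T G)) in *. set (B := vertex_dot d T G G) in *.
  set (X := dot d Fv (vertex_sum d T G)) in *. set (Fn := dot d Fv Fv) in *.
  assert (Hq : A / (n * n) <= (B + A) / (n * (n + 1))).
  { assert (0 <= (n * B - A) / (n * n * (n + 1))) by (apply Rle_mult_inv_pos; nra).
    replace ((B + A) / (n * (n + 1))) with (A / (n * n) + (n * B - A) / (n * n * (n + 1)))
      by (field; lra).
    lra. }
  replace ((V / n * X)^2) with (V * V * (X^2 / (n * n))) by (field; lra).
  replace (V * Fn * (V / (n * (n + 1)) * (B + A))) with (V * V * (Fn * ((B + A) / (n * (n + 1)))))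
    by (field; lra).
  apply Rmult_le_compat_l; [nra|].
  apply Rle_trans with (Fn * (A / (n * n))).
  - replace (Fn * (A / (n * n))) with (Fn * A / (n * n)) by (field; lra).
    apply Rmult_le_compat_r; [apply Rlt_le, Rinv_0_lt_compat; nra|lra].
  - apply Rmult_le_compat_l; auto.
Qed.

Lemma vertex_dot_le_int_dot d T F j : (j <= d)%nat -> 0 < vol d T ->
  dot d (F (T j)) (F (T j)) <= INR (S d) * INR (S (S d)) / vol d T * int_dot d T F F.
Proof.
  intros Hj HV. rewrite int_dot_vertex. unfold quad_weight.
  assert (dot d (F (T j)) (F (T j)) <= vertex_dot d T F F).
  { apply (sumR_term_le (S d) (fun j => dot d (F (T j)) (F (T j)))); [lia|intros; apply dot_ge0]. }
  pose proof (dot_ge0 d (vertex_sum d T F)).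
  pose proof (lt_0_INR (S d) ltac:(lia)). pose proof (lt_0_INR (S (S d)) ltac:(lia)).
  replace (INR (S d) * INR (S (S d)) / vol d T * (vol d T / (INR (S d) * INR (S (S d))) * _))
    with (vertex_dot d T F F + dot d (vertex_sum d T F) (vertex_sum d T F)) by (field; repeat split; lra).
  lra.
Qed.

(** * Inner products on the mesh *)

Definition ipV_elem d M k (u v : rt) : R := int_dot d (elt M k) (rt_eval u k) (rt_eval v k).

Lemma ipV_elem_ge0 d M k v : 0 <= ipV_elem d M k v v.
Proof. apply int_dot_ge0. Qed.

Lemma ipV_sum d M u v : ipV d M u v = sumR (nel M) (fun k => ipV_elem d M k u v).
Proof. unfold ipV, ipVw. apply sumR_ext; intros. unfold ipV_elem; ring. Qed.

Lemma ipW_ge0 d M w : 0 <= ipW d M w w.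
Proof.
  unfold ipW. apply sumR_ge0; intros k _. pose proof (vol_ge0 d (elt M k)).
  rewrite Rmult_assoc. apply Rmult_le_pos; nra.
Qed.

Lemma ipV_ge0 d M v : 0 <= ipV d M v v.
Proof. rewrite ipV_sum. apply sumR_ge0; intros; apply ipV_elem_ge0. Qed.

Lemma normW_ge0 d M w : 0 <= normW d M w.
Proof. apply sqrt_pos. Qed.

Lemma normV_ge0 d M v : 0 <= normV d M v.
Proof. apply sqrt_pos. Qed.

Lemma normW_sqr d M w : (normW d M w)^2 = ipW d M w w.
Proof. apply pow2_sqrt, ipW_ge0. Qed.

Lemma normV_sqr d M v : (normV d M v)^2 = ipV d M v v.
Proof. apply pow2_sqrt, ipV_ge0. Qed.

Lemma vol_sqr_le_ipW d M w k : (k < nel M)%nat -> vol d (elt M k) * (w k)^2 <= ipW d M w w.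
Proof.
  intros Hk. unfold ipW. replace (vol d (elt M k) * (w k)^2) with (vol d (elt M k) * w k * w k) by ring.
  apply (sumR_term_le _ (fun k => vol d (elt M k) * w k * w k)); auto.
  intros j _. pose proof (vol_ge0 d (elt M j)). rewrite Rmult_assoc. apply Rmult_le_pos; nra.
Qed.

Lemma ipW_indicator d M f k0 : (k0 < nel M)%nat ->
  ipW d M f (fun k => if Nat.eqb k k0 then 1 else 0) = vol d (elt M k0) * f k0.
Proof.
  intros H. unfold ipW. rewrite (sumR_single _ _ k0); auto.
  - rewrite Nat.eqb_refl. ring.
  - intros k _ Hne. apply Nat.eqb_neq in Hne. rewrite Hne. ring.
Qed.

Lemma ipW_inj d M f g : (forall w, ipW d M f w = ipW d M g w) ->
  forall k, (k < nel M)%nat -> 0 < vol d (elt M k) -> f k = g k.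
Proof.
  intros H k Hk HV. specialize (H (fun j => if Nat.eqb j k then 1 else 0)).
  rewrite !ipW_indicator in H by auto. apply Rmult_eq_reg_l in H; lra.
Qed.

Lemma ipWdiv_as_ipW d M w v : ipWdiv d M w v = ipW d M (divh d v) w.
Proof. unfold ipWdiv, ipW. apply sumR_ext; intros; ring. Qed.

Lemma ipWdiv_div_free d M w v : (forall k, (k < nel M)%nat -> divh d v k = 0) -> ipWdiv d M w v = 0.
Proof.
  intros H. unfold ipWdiv. rewrite <- (sumR_0 (nel M)). apply sumR_ext; intros. rewrite H; auto; ring.
Qed.

Lemma ipWdiv_self d M w v : (forall k, (k < nel M)%nat -> divh d v k = w k) ->
  ipWdiv d M w v = ipW d M w w.
Proof. intros H. unfold ipWdiv, ipW. apply sumR_ext; intros. rewrite H; auto. Qed.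

Lemma rt_eval_sub v w k x c : rt_eval (rt_sub v w) k x c = rt_eval v k x c - rt_eval w k x c.
Proof. unfold rt_eval, rt_sub; simpl; ring. Qed.

Lemma divh_sub d v w k : divh d (rt_sub v w) k = divh d v k - divh d w k.
Proof. unfold divh, rt_sub; simpl; ring. Qed.

Lemma ipW_sub_l d M f g w : ipW d M (fun k => f k - g k) w = ipW d M f w - ipW d M g w.
Proof. unfold ipW. rewrite <- sumR_sub. apply sumR_ext; intros; ring. Qed.

Lemma ipWdiv_sub_l d M w w' v : ipWdiv d M (fun k => w k - w' k) v = ipWdiv d M w v - ipWdiv d M w' v.
Proof. unfold ipWdiv. rewrite <- sumR_sub. apply sumR_ext; intros; ring. Qed.

Lemma ipVw_sub_l d M g u u' v : ipVw d M g (rt_sub u u') v = ipVw d M g u v - ipVw d M g u' v.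
Proof.
  unfold ipVw. rewrite <- sumR_sub. apply sumR_ext; intros k _.
  rewrite (int_dot_ext d _ _ (fun x c => rt_eval u k x c - rt_eval u' k x c) _ (rt_eval v k))
    by (intros j _ c _; auto; apply rt_eval_sub).
  rewrite int_dot_sub_l. ring.
Qed.

Lemma ipVw_sub_r d M g u v v' : ipVw d M g u (rt_sub v v') = ipVw d M g u v - ipVw d M g u v'.
Proof.
  unfold ipVw. rewrite <- sumR_sub. apply sumR_ext; intros k _.
  rewrite (int_dot_ext d _ (rt_eval u k) (rt_eval u k) _ (fun x c => rt_eval v k x c - rt_eval v' k x c))
    by (intros j _ c _; auto; apply rt_eval_sub).
  rewrite int_dot_sub_r. ring.
Qed.

Lemma ipVw_sub_g d M g g' u v : ipVw d M (fun k => g k - g' k) u v = ipVw d M g u v - ipVw d M g' u v.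
Proof. unfold ipVw. rewrite <- sumR_sub. apply sumR_ext; intros; ring. Qed.

Lemma ipFV_sub_F d M F F' v : ipFV d M (fun k c => F k c - F' k c) v = ipFV d M F v - ipFV d M F' v.
Proof.
  unfold ipFV, int_aff. rewrite <- sumR_sub. apply sumR_ext; intros.
  rewrite <- Rmult_minus_distr_l, <- sumR_sub. f_equal. apply sumR_ext; intros. apply dot_sub_l.
Qed.

Lemma in_Vh_sub d M v v' : in_Vh d M v -> in_Vh d M v' -> in_Vh d M (rt_sub v v').
Proof.
  intros H1 H2 k k' j0 Hk Hk' Hne Hj0 Hsh y Hy j Hj Hjj.
  rewrite !(dot_ext d y y (rt_eval (rt_sub v v') _ _)
              (fun c => rt_eval v _ (elt M k j) c - rt_eval v' _ (elt M k j) c))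
    by (intros c _; auto; apply rt_eval_sub).
  rewrite !dot_sub_r, (H1 k k' j0), (H2 k k' j0); auto.
Qed.

Lemma ipVw_Cauchy_Schwarz d M g u v :
  (ipVw d M g u v)^2 <= sumR (nel M) (fun k => (g k)^2 * ipV_elem d M k u u) * ipV d M v v.
Proof.
  rewrite ipV_sum. unfold ipVw. apply sumR_Cauchy_Schwarz. intros k Hk. repeat split.
  - apply Rmult_le_pos; [apply pow2_ge_0|apply ipV_elem_ge0].
  - apply ipV_elem_ge0.
  - rewrite Rpow_mult_distr, Rmult_assoc.
    apply Rmult_le_compat_l; [apply pow2_ge_0|apply int_dot_Cauchy_Schwarz].
Qed.

Lemma ipFV_Cauchy_Schwarz d M F v :
  (ipFV d M F v)^2 <= sumR (nel M) (fun k => vol d (elt M k) * dot d (F k) (F k)) * ipV d M v v.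
Proof.
  rewrite ipV_sum. unfold ipFV. apply sumR_Cauchy_Schwarz. intros k Hk. repeat split.
  - apply Rmult_le_pos; [apply vol_ge0|apply dot_ge0].
  - apply ipV_elem_ge0.
  - apply int_aff_dot_sqr_le.
Qed.

Lemma ipVw_ge d M g lo v : (forall k, (k < nel M)%nat -> lo <= g k) ->
  lo * ipV d M v v <= ipVw d M g v v.
Proof.
  intros H. rewrite ipV_sum, <- sumR_scal. unfold ipVw. apply sumR_le; intros.
  apply Rmult_le_compat_r; [apply int_dot_ge0|auto].
Qed.

Lemma abs_le_mul_sqrt X P Q c : 0 <= c -> 0 <= P -> 0 <= Q -> X^2 <= P * Q -> P <= c^2 ->
  Rabs X <= c * sqrt Q.
Proof.
  intros Hc HP0 HQ HX HP.
  apply Rle_trans with (sqrt P * sqrt Q); [apply abs_le_sqrt_mul; auto|].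
  apply Rmult_le_compat_r; [apply sqrt_pos|apply sqrt_le_of_le_sqr; auto].
Qed.

Lemma ipVw_abs_le d M g u v c : 0 <= c ->
  sumR (nel M) (fun k => (g k)^2 * ipV_elem d M k u u) <= c^2 ->
  Rabs (ipVw d M g u v) <= c * normV d M v.
Proof.
  intros Hc H. unfold normV.
  eapply abs_le_mul_sqrt; [exact Hc| |apply ipV_ge0|apply ipVw_Cauchy_Schwarz|exact H].
  apply sumR_ge0; intros. apply Rmult_le_pos; [apply pow2_ge_0|apply ipV_elem_ge0].
Qed.

Lemma ipFV_abs_le d M F v c : 0 <= c ->
  sumR (nel M) (fun k => vol d (elt M k) * dot d (F k) (F k)) <= c^2 ->
  Rabs (ipFV d M F v) <= c * normV d M v.
Proof.
  intros Hc H. unfold normV.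
  eapply abs_le_mul_sqrt; [exact Hc| |apply ipV_ge0|apply ipFV_Cauchy_Schwarz|exact H].
  apply sumR_ge0; intros. apply Rmult_le_pos; [apply vol_ge0|apply dot_ge0].
Qed.

Lemma ipVw_abs_le_bounded d M g u v b : 0 <= b -> (forall k, (k < nel M)%nat -> Rabs (g k) <= b) ->
  Rabs (ipVw d M g u v) <= b * normV d M u * normV d M v.
Proof.
  intros Hb Hg. apply ipVw_abs_le; [apply Rmult_le_pos; auto using normV_ge0|].
  rewrite Rpow_mult_distr, normV_sqr, ipV_sum, <- sumR_scal. apply sumR_le; intros k Hk.
  apply Rmult_le_compat_r; [apply ipV_elem_ge0|].
  rewrite <- pow2_abs. apply pow_incr. split; [apply Rabs_pos|auto].
Qed.

Lemma ipV_abs_le d M u v : Rabs (ipV d M u v) <= normV d M u * normV d M v.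
Proof.
  rewrite <- (Rmult_1_l (normV d M u)). apply ipVw_abs_le_bounded; [lra|].
  intros. rewrite Rabs_R1. lra.
Qed.

Lemma ipV_comm d M u v : ipV d M u v = ipV d M v u.
Proof. unfold ipV, ipVw. apply sumR_ext; intros. rewrite int_dot_comm. auto. Qed.

Lemma normV_sub_le d M u v : normV d M (rt_sub u v) <= normV d M u + normV d M v.
Proof.
  pose proof (normV_ge0 d M u). pose proof (normV_ge0 d M v).
  apply sqrt_le_of_le_sqr; [lra|].
  assert (E : ipV d M (rt_sub u v) (rt_sub u v) = ipV d M u u - 2 * ipV d M u v + ipV d M v v).
  { pose proof (ipV_comm d M u v). unfold ipV in *. rewrite ipVw_sub_l, !ipVw_sub_r. lra. }
  rewrite E, <- (normV_sqr d M u), <- (normV_sqr d M v).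
  pose proof (Rle_abs (- ipV d M u v)). rewrite Rabs_Ropp in H1.
  pose proof (ipV_abs_le d M u v). nra.
Qed.

Lemma Lip_ge0 f c : Lip f c -> 0 <= c.
Proof.
  intros H. specialize (H 1 0). rewrite Rminus_0_r, Rabs_R1 in H. pose proof (Rabs_pos (f 1 - f 0)). lra.
Qed.

Lemma LipV_ge0 d f c : LipV d f c -> 0 <= c.
Proof.
  intros H. specialize (H 1 0). rewrite Rminus_0_r, Rabs_R1 in H. unfold enorm in H.
  pose proof (sqrt_pos (dot d (fun k => f 1 k - f 0 k) (fun k => f 1 k - f 0 k))). lra.
Qed.

Lemma Lip_weaken f c c' : Lip f c -> c <= c' -> Lip f c'.
Proof. intros H Hc x y. pose proof (Rabs_pos (x - y)). specialize (H x y). nra. Qed.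

Lemma Lip_sqr f c x y : Lip f c -> (f x - f y)^2 <= c^2 * (x - y)^2.
Proof.
  intros H. specialize (H x y). pose proof (Rabs_pos (f x - f y)).
  rewrite <- (pow2_abs (f x - f y)), <- (pow2_abs (x - y)), <- Rpow_mult_distr. apply pow_incr; lra.
Qed.

Lemma LipV_sqr d f c x y : LipV d f c ->
  dot d (fun k => f x k - f y k) (fun k => f x k - f y k) <= c^2 * (x - y)^2.
Proof.
  intros H. specialize (H x y). unfold enorm in H.
  pose proof (sqrt_pos (dot d (fun k => f x k - f y k) (fun k => f x k - f y k))).
  rewrite <- (pow2_sqrt (dot d _ _)) by apply dot_ge0.
  rewrite <- (pow2_abs (x - y)), <- Rpow_mult_distr. apply pow_incr; lra.
Qed.

Lemma monotone_Lip_sqr_le s L x y : (forall x y, x <= y -> s x <= s y) -> Lip s L ->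
  (s x - s y)^2 <= L * (s x - s y) * (x - y).
Proof.
  intros Hm Hl. specialize (Hl x y). destruct (Rle_or_lt x y) as [Hxy|Hxy].
  - pose proof (Hm x y Hxy). rewrite !Rabs_left1 in Hl by lra. nra.
  - pose proof (Hm y x ltac:(lra)). rewrite !Rabs_right in Hl by lra. nra.
Qed.

Lemma vertex_in_simplex d (T : simplex) j : (j <= d)%nat -> in_simplex d T (T j).
Proof.
  intros Hj. exists (fun i => if Nat.eqb i j then 1 else 0).
  assert (Hsingle : forall g, sumR (S d) (fun i => (if Nat.eqb i j then 1 else 0) * g i) = g j).
  { intros g. rewrite (sumR_single _ _ j) by
      (lia || (intros i _ Hi; apply Nat.eqb_neq in Hi; rewrite Hi; ring)).
    rewrite Nat.eqb_refl. ring. }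
  repeat split.
  - intros i _. destruct (Nat.eqb i j); lra.
  - transitivity (sumR (S d) (fun i => (if Nat.eqb i j then 1 else 0) * 1)).
    + apply sumR_ext; intros; ring.
    + apply (Hsingle (fun _ => 1)).
  - intros c _. rewrite Hsingle. auto.
Qed.

Lemma ipV_elem_le_Linf d M u Mu k : Linf_le d M u Mu -> (k < nel M)%nat ->
  ipV_elem d M k u u <= vol d (elt M k) * Mu^2.
Proof.
  intros H Hk. apply int_dot_le_vol; [apply pow2_ge_0|].
  intros j Hj. specialize (H k (elt M k j) Hk (vertex_in_simplex d _ j Hj)). unfold enorm in H.
  pose proof (sqrt_pos (dot d (rt_eval u k (elt M k j)) (rt_eval u k (elt M k j)))).
  rewrite <- (pow2_sqrt (dot d _ _)) by apply dot_ge0. apply pow_incr; lra.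
Qed.

Lemma ipW_Lip_le d M f c (x y : W) : Lip f c ->
  ipW d M (fun k => f (x k) - f (y k)) (fun k => f (x k) - f (y k))
  <= c^2 * ipW d M (Wsub x y) (Wsub x y).
Proof.
  intros H. unfold ipW, Wsub. rewrite <- sumR_scal. apply sumR_le; intros k Hk.
  pose proof (vol_ge0 d (elt M k)). pose proof (Lip_sqr f c (x k) (y k) H). nra.
Qed.

Lemma sum_LipV_le d M f c (x y : W) : LipV d f c ->
  sumR (nel M) (fun k => vol d (elt M k) *
    dot d (fun i => f (x k) i - f (y k) i) (fun i => f (x k) i - f (y k) i))
  <= c^2 * ipW d M (Wsub x y) (Wsub x y).
Proof.
  intros H. unfold ipW, Wsub. rewrite <- sumR_scal. apply sumR_le; intros k Hk.
  pose proof (vol_ge0 d (elt M k)). pose proof (LipV_sqr d f c (x k) (y k) H). nra.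
Qed.

Lemma sum_Lip_Linf_le d M f c (x y : W) u Mu : Lip f c -> Linf_le d M u Mu ->
  sumR (nel M) (fun k => (f (x k) - f (y k))^2 * ipV_elem d M k u u)
  <= (c * Mu)^2 * ipW d M (Wsub x y) (Wsub x y).
Proof.
  intros H Hu. unfold ipW, Wsub. rewrite <- sumR_scal. apply sumR_le; intros k Hk.
  pose proof (Lip_sqr f c (x k) (y k) H). pose proof (ipV_elem_le_Linf d M u Mu k Hu Hk).
  pose proof (ipV_elem_ge0 d M k u). pose proof (pow2_ge_0 (f (x k) - f (y k))).
  apply Rle_trans with (c^2 * (x k - y k)^2 * (vol d (elt M k) * Mu^2)); [|right; ring].
  apply Rmult_le_compat; auto.
Qed.

Lemma ipVw_Lip_flow_weight_abs_le d M f c (x y : W) u v Mu : Lip f c -> Linf_le d M u Mu ->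
  Rabs (ipVw d M (fun k => f (x k) - f (y k)) u v) <= c * Rabs Mu * normW d M (Wsub x y) * normV d M v.
Proof.
  intros Hf Hu. pose proof (Lip_ge0 f c Hf). apply ipVw_abs_le.
  - pose proof (Rabs_pos Mu). pose proof (normW_ge0 d M (Wsub x y)). repeat apply Rmult_le_pos; auto.
  - rewrite !Rpow_mult_distr, pow2_abs, normW_sqr, <- Rpow_mult_distr. apply sum_Lip_Linf_le; auto.
Qed.

Lemma ipFV_LipV_abs_le d M f c (x y : W) v : LipV d f c ->
  Rabs (ipFV d M (fun k i => f (x k) i - f (y k) i) v) <= c * normW d M (Wsub x y) * normV d M v.
Proof.
  intros Hf. pose proof (LipV_ge0 d f c Hf). apply ipFV_abs_le.
  - apply Rmult_le_pos; [auto|apply normW_ge0].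
  - rewrite Rpow_mult_distr, normW_sqr. apply sum_LipV_le; auto.
Qed.

(** * Stability of the discrete mixed problems *)

Lemma div_stable_bound d M C w (l : rt -> R) g : 0 <= C -> 0 <= g -> div_stable d M C ->
  (forall v, in_Vh d M v -> ipWdiv d M w v = l v) ->
  (forall v, in_Vh d M v -> Rabs (l v) <= g * normV d M v) ->
  normW d M w <= C * g.
Proof.
  intros HC Hg Hdiv Hl Hb. destruct (Hdiv w) as (v & Hv & Hdv & Hnv).
  assert (H : (normW d M w)^2 <= g * (C * normW d M w)).
  { rewrite normW_sqr, <- (ipWdiv_self d M w v Hdv), Hl by auto.
    eapply Rle_trans; [apply Rle_abs|]. eapply Rle_trans; [apply Hb; auto|].
    apply Rmult_le_compat_l; auto. }
  pose proof (normW_ge0 d M w).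
  destruct (Rle_or_lt (normW d M w) (C * g)) as [|Hlt]; auto.
  assert (0 <= C * g) by (apply Rmult_le_pos; auto).
  assert (C * g * normW d M w < normW d M w * normW d M w) by (apply Rmult_lt_compat_r; lra). nra.
Qed.

Lemma le_of_sqr_le_affine a A B s U : 0 < a -> 0 <= s -> 0 <= U -> 0 <= A -> 0 <= B ->
  a * U^2 <= A * s * U + B * s^2 -> U <= (A / a + B / a + 1) * s.
Proof.
  intros Ha Hs HU HA HB H.
  assert (HA' : 0 <= A / a) by (apply Rle_mult_inv_pos; auto).
  assert (HB' : 0 <= B / a) by (apply Rle_mult_inv_pos; auto).
  assert (H' : U^2 <= A / a * s * U + B / a * s^2).
  { apply Rmult_le_reg_l with a; auto.
    replace (a * (A / a * s * U + B / a * s ^ 2)) with (A * s * U + B * s^2) by (field; lra). auto. }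
  set (A' := A / a) in *. set (B' := B / a) in *.
  destruct (Rle_or_lt U ((A' + B' + 1) * s)) as [|Hc]; auto.
  assert (U * U > U * ((A' + B' + 1) * s)) by (apply Rmult_lt_compat_l; nra).
  assert ((B' + 1) * s * U >= (B' + 1) * s * ((A' + B' + 1) * s)) by (apply Rle_ge, Rmult_le_compat_l; nra).
  nra.
Qed.

Definition u_coef (a_lo a_hi C c2 cg : R) : R :=
  (a_hi * C * c2 + cg) / a_lo + cg * C * c2 / a_lo + 1.

Lemma u_coef_ge0 a_lo a_hi C c2 cg : 0 < a_lo -> 0 <= a_hi -> 0 <= C -> 0 <= c2 -> 0 <= cg ->
  0 <= u_coef a_lo a_hi C c2 cg.
Proof.
  intros. unfold u_coef.
  assert (0 <= a_hi * C * c2) by (repeat apply Rmult_le_pos; auto).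
  assert (0 <= (a_hi * C * c2 + cg) / a_lo) by (apply Rle_mult_inv_pos; auto; lra).
  assert (0 <= cg * C * c2 / a_lo) by (apply Rle_mult_inv_pos; auto; repeat apply Rmult_le_pos; auto).
  lra.
Qed.

Section FlowStability.

Variables (d : nat) (M : mesh) (C a_lo a_hi c2 cg sg : R) (g : W) (du : rt) (dp f : W) (G : rt -> R).
Hypotheses (HC : 0 <= C) (Ha_lo : 0 < a_lo) (Hlohi : a_lo <= a_hi)
  (Hc2 : 0 <= c2) (Hcg : 0 <= cg) (Hsg : 0 <= sg)
  (Hdiv : div_stable d M C) (Hdu : in_Vh d M du)
  (Hg : forall k, (k < nel M)%nat -> a_lo <= g k <= a_hi)
  (Heq : forall v, in_Vh d M v -> ipVw d M g du v - ipWdiv d M dp v + G v = 0)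
  (HG : forall v, in_Vh d M v -> Rabs (G v) <= cg * sg * normV d M v).

Lemma flow_weight_abs_le : forall k, (k < nel M)%nat -> Rabs (g k) <= a_hi.
Proof. intros k Hk. destruct (Hg k Hk). rewrite Rabs_right by lra. lra. Qed.

Lemma flow_velocity_bound : (forall k, (k < nel M)%nat -> divh d du k = f k) -> normW d M f <= c2 * sg ->
  normV d M du <= u_coef a_lo a_hi C c2 cg * sg.
Proof.
  intros Hdf Hf. destruct (Hdiv f) as (w0 & Hw0 & Hdw0 & Hnw0).
  pose proof (in_Vh_sub d M du w0 Hdu Hw0) as Hz.
  assert (Hz0 : ipWdiv d M dp (rt_sub du w0) = 0).
  { apply ipWdiv_div_free. intros k Hk. rewrite divh_sub, Hdf, Hdw0 by auto. ring. }
  assert (Hcoer : a_lo * (normV d M du)^2 <= ipVw d M g du du).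
  { rewrite normV_sqr. apply ipVw_ge. intros; apply Hg; auto. }
  assert (Htest : ipVw d M g du du = ipVw d M g du w0 - G (rt_sub du w0)).
  { pose proof (Heq _ Hz) as H. rewrite Hz0, ipVw_sub_r in H. lra. }
  pose proof (ipVw_abs_le_bounded d M g du w0 a_hi ltac:(lra) flow_weight_abs_le) as H1.
  pose proof (Rle_abs (ipVw d M g du w0)).
  pose proof (HG _ Hz) as H2. pose proof (normV_sub_le d M du w0) as H3.
  pose proof (Rle_abs (- G (rt_sub du w0))). rewrite Rabs_Ropp in H0.
  assert (Hw0C : normV d M w0 <= C * c2 * sg).
  { eapply Rle_trans; [exact Hnw0|]. rewrite Rmult_assoc. apply Rmult_le_compat_l; auto. }
  pose proof (normV_ge0 d M du). pose proof (normV_ge0 d M w0).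
  set (U := normV d M du) in *. set (W0 := normV d M w0) in *.
  apply le_of_sqr_le_affine; auto.
  - assert (0 <= a_hi * C * c2) by (repeat apply Rmult_le_pos; lra). lra.
  - repeat apply Rmult_le_pos; lra.
  - assert (a_hi * U * W0 <= a_hi * U * (C * c2 * sg)) by (apply Rmult_le_compat_l; nra).
    assert (cg * sg * (U + W0) <= cg * sg * (U + C * c2 * sg)) by (apply Rmult_le_compat_l; nra).
    assert (cg * sg * normV d M (rt_sub du w0) <= cg * sg * (U + W0)) by (apply Rmult_le_compat_l; nra).
    nra.
Qed.

Lemma flow_pressure_bound : normW d M dp <= C * (a_hi * normV d M du + cg * sg).
Proof.
  apply (div_stable_bound d M C dp (fun v => ipVw d M g du v + G v)); auto.
  - pose proof (normV_ge0 d M du).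
    assert (0 <= a_hi * normV d M du) by (apply Rmult_le_pos; lra).
    assert (0 <= cg * sg) by (apply Rmult_le_pos; lra). lra.
  - intros v Hv. specialize (Heq v Hv). lra.
  - intros v Hv. eapply Rle_trans; [apply Rabs_triang|].
    pose proof (ipVw_abs_le_bounded d M g du v a_hi ltac:(lra) flow_weight_abs_le).
    pose proof (HG v Hv). nra.
Qed.

End FlowStability.

Lemma mass_flux_energy d M L tau rho (e eb ds : W) (dq : rt) : 0 < L -> 0 < tau ->
  (forall k, (k < nel M)%nat -> L * (e k - eb k) + ds k + tau * divh d dq k = 0) ->
  (forall k, (k < nel M)%nat -> (ds k)^2 <= L * ds k * eb k) ->
  Rabs (ipV d M dq dq - ipWdiv d M e dq) <= rho * normW d M ds * normV d M dq ->
  L * tau * ipV d M dq dq + L^2 * ipW d M e e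
  <= L^2 * ipW d M eb eb - (1 - L * tau * rho^2) * ipW d M ds ds.
Proof.
  intros HL Htau Hmass Hds Hflux.
  set (Z := ipW d M e (fun k => L * eb k - ds k)).
  assert (Hdiv : tau * ipWdiv d M e dq = Z - L * ipW d M e e).
  { unfold Z, ipWdiv, ipW. rewrite <- !sumR_scal, <- sumR_sub. apply sumR_ext; intros k Hk.
    transitivity (vol d (elt M k) * e k * (tau * divh d dq k)); [ring|].
    replace (tau * divh d dq k) with (- (L * (e k - eb k) + ds k)) by (specialize (Hmass k Hk); lra).
    ring. }
  (* [ds^2 <= L ds eb] turns the cross term into a dissipation of [ds] *)
  assert (Hcross : 2 * L * Z <= L^2 * ipW d M e e + L^2 * ipW d M eb eb - ipW d M ds ds).
  { unfold Z, ipW. rewrite <- !sumR_scal, <- sumR_add, <- sumR_sub. apply sumR_le; intros k Hk.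
    specialize (Hds k Hk). pose proof (vol_ge0 d (elt M k)).
    pose proof (pow2_ge_0 (L * e k - L * eb k + ds k)).
    assert (0 <= vol d (elt M k) * (L * e k - L * eb k + ds k)^2) by (apply Rmult_le_pos; auto).
    assert (0 <= vol d (elt M k) * (L * ds k * eb k - (ds k)^2)) by (apply Rmult_le_pos; lra).
    nra. }
  assert (Hres : 2 * L * tau * (ipV d M dq dq - ipWdiv d M e dq)
                 <= L * tau * (ipV d M dq dq + rho^2 * ipW d M ds ds)).
  { pose proof (Rle_abs (ipV d M dq dq - ipWdiv d M e dq)).
    pose proof (pow2_ge_0 (normV d M dq - rho * normW d M ds)).
    set (X := ipV d M dq dq - ipWdiv d M e dq) in *.
    rewrite <- (normV_sqr d M dq), <- (normW_sqr d M ds).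
    assert (2 * X <= normV d M dq ^ 2 + rho ^ 2 * normW d M ds ^ 2) by nra.
    replace (2 * L * tau * X) with (L * tau * (2 * X)) by ring.
    apply Rmult_le_compat_l; [nra|lra]. }
  nra.
Qed.

Lemma contraction_of_energy L tau C rho se sq sg Eb : 0 < L -> 0 < tau -> 0 < C ->
  3 * L * rho^2 * tau <= 1 -> 0 <= se -> 0 <= sq ->
  L * tau * sq^2 + L^2 * se^2 <= L^2 * Eb - (1 - L * tau * rho^2) * sg^2 ->
  se <= C * (sq + rho * sg) ->
  se^2 <= 3 * C^2 * L / (3 * C^2 * L + tau) * Eb.
Proof.
  intros HL Htau HC Hsmall Hse Hsq Henergy Hinf.
  assert (HC2 : 0 < C^2) by nra.
  assert (Hsq2 : 2 * se^2 <= 3 * C^2 * sq^2 + 6 * C^2 * rho^2 * sg^2).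
  { assert (se^2 <= C^2 * (sq + rho * sg)^2).
    { rewrite <- Rpow_mult_distr. apply pow_incr. lra. }
    pose proof (pow2_ge_0 (sq / 2 - rho * sg)). nra. }
  assert (Hdiss : 0 <= (1 - 3 * L * tau * rho^2) * sg^2) by (apply Rmult_le_pos; [lra|apply pow2_ge_0]).
  assert (H3 : se^2 * (3 * C^2 * L + 2 * tau) <= 3 * C^2 * L * Eb).
  { apply Rmult_le_reg_l with (L / (3 * C^2)); [apply Rdiv_lt_0_compat; lra|].
    replace (L / (3 * C ^ 2) * (se ^ 2 * (3 * C ^ 2 * L + 2 * tau)))
      with (L^2 * se^2 + L * tau * (2 * se^2) / (3 * C^2)) by (field; lra).
    replace (L / (3 * C ^ 2) * (3 * C ^ 2 * L * Eb)) with (L^2 * Eb) by (field; lra).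
    assert (L * tau * (2 * se^2) / (3 * C^2) <= L * tau * (sq^2 + 2 * rho^2 * sg^2)).
    { unfold Rdiv. rewrite Rmult_assoc. apply Rmult_le_compat_l; [nra|].
      apply Rmult_le_reg_r with (3 * C^2); [lra|].
      rewrite Rmult_assoc, Rinv_l by lra. nra. }
    nra. }
  pose proof (pow2_ge_0 se).
  apply Rmult_le_reg_r with (3 * C^2 * L + tau); [nra|].
  replace (3 * C ^ 2 * L / (3 * C ^ 2 * L + tau) * Eb * (3 * C ^ 2 * L + tau)) with (3 * C^2 * L * Eb)
    by (field; nra).
  nra.
Qed.

Lemma flux_bound_of_energy L tau rho se sq sg Eb : 0 < L -> 0 < tau ->
  3 * L * rho^2 * tau <= 1 ->
  L * tau * sq^2 + L^2 * se^2 <= L^2 * Eb - (1 - L * tau * rho^2) * sg^2 ->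
  sg^2 <= L^2 * Eb ->
  sq^2 <= (L / tau + rho^2 * L^2) * Eb.
Proof.
  intros HL Htau Hsmall Henergy Hsg.
  apply Rmult_le_reg_l with (L * tau); [nra|].
  replace (L * tau * ((L / tau + rho ^ 2 * L ^ 2) * Eb)) with (L^2 * Eb + L * tau * rho^2 * (L^2 * Eb))
    by (field; lra).
  assert (L * tau * rho^2 * sg^2 <= L * tau * rho^2 * (L^2 * Eb))
    by (apply Rmult_le_compat_l; [apply Rmult_le_pos; [nra|apply pow2_ge_0]|lra]).
  assert (0 <= L^2 * se^2) by (apply Rmult_le_pos; apply pow2_ge_0).
  assert ((1 - L * tau * rho^2) * sg^2 = sg^2 - L * tau * rho^2 * sg^2) by ring.
  pose proof (pow2_ge_0 sg). lra.
Qed.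

(** * Limits *)

Lemma cv_const c : Un_cv (fun _ => c) c.
Proof. intros e He. exists O. intros. unfold Rdist. rewrite Rminus_diag, Rabs_R0; auto. Qed.

Lemma cv_shift x l : Un_cv x l -> Un_cv (fun i => x (S i)) l.
Proof. intros Hx e He. destruct (Hx e He) as [N HN]. exists N. intros. apply HN. lia. Qed.

Lemma cv_unshift x l : Un_cv (fun i => x (S i)) l -> Un_cv x l.
Proof.
  intros Hx e He. destruct (Hx e He) as [N HN]. exists (S N).
  intros [|n] Hn; [lia|]. apply HN. lia.
Qed.

Lemma cv_Lip f c x l : Lip f c -> Un_cv x l -> Un_cv (fun i => f (x i)) (f l).
Proof.
  intros Hf Hx. apply continuity_seq; auto.
  intros e He. pose proof (Lip_ge0 f c Hf). exists (e / (c + 1)). split.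
  - apply Rdiv_lt_0_compat; lra.
  - intros y [_ Hy]. simpl in *. unfold Rdist in *. eapply Rle_lt_trans; [apply Hf|].
    apply Rle_lt_trans with ((c + 1) * Rabs (y - l)); [pose proof (Rabs_pos (y - l)); nra|].
    replace e with ((c + 1) * (e / (c + 1))) by (field; lra). apply Rmult_lt_compat_l; lra.
Qed.

Lemma abs_coord_le_enorm d x i : (i < d)%nat -> Rabs (x i) <= enorm d x.
Proof.
  intros Hi. unfold enorm. rewrite <- sqrt_Rsqr_abs. apply sqrt_le_1_alt.
  rewrite Rsqr_pow2. apply sqr_coord_le_dot; auto.
Qed.

Lemma cv_LipV d f c x l i : LipV d f c -> (i < d)%nat -> Un_cv x l ->
  Un_cv (fun n => f (x n) i) (f l i).
Proof.
  intros Hf Hi. apply (cv_Lip (fun y => f y i) c). intros y z.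
  eapply Rle_trans; [|apply Hf]. apply (abs_coord_le_enorm d (fun k => f y k - f z k)); auto.
Qed.

Lemma sum_f_R0_telescope x N : sum_f_R0 (fun m => x (S m) - x m) N = x (S N) - x O.
Proof. induction N; simpl; [|rewrite IHN]; ring. Qed.

Lemma cv_of_geometric_increments x B r : 0 <= r < 1 ->
  (forall m, Rabs (x (S m) - x m) <= B * r^m) -> exists l, Un_cv x l.
Proof.
  intros Hr Hx.
  assert (Hgeo : {l | Un_cv (fun N => sum_f_R0 (fun m => B * r^m) N) l}).
  { exists (B * / (1 - r)).
    assert (Hgp := GP_infinite r ltac:(rewrite Rabs_pos_eq; lra)).
    intros e He. destruct (CV_mult _ _ _ _ (cv_const B) Hgp e He) as [N HN].
    exists N. intros n Hn. rewrite (sum_eq _ (fun m => 1 * r^m * B)), <- scal_sum by (intros; ring).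
    apply HN; auto. }
  assert (Habs := Rseries_CV_comp (fun m => Rabs (x (S m) - x m)) _
    (fun m => conj (Rabs_pos _) (Hx m)) Hgeo).
  destruct (cv_cauchy_2 _ (cauchy_abs _ (CV_Cauchy _ Habs))) as [l Hl].
  exists (x O + l). apply cv_unshift.
  intros e He. destruct (Hl e He) as [N HN]. exists N. intros n Hn.
  specialize (HN n Hn). rewrite sum_f_R0_telescope in HN. unfold Rdist in *.
  replace (x (S n) - (x O + l)) with (x (S n) - x O - l) by ring. auto.
Qed.

Lemma cv_of_sqr_increments x A r : 0 <= A -> 0 <= r < 1 ->
  (forall m, (x (S m) - x m)^2 <= A * r^m) -> exists l, Un_cv x l.
Proof.
  intros HA Hr H. apply (cv_of_geometric_increments x (sqrt A) (sqrt r)).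
  - split; [apply sqrt_pos|]. rewrite <- sqrt_1. apply sqrt_lt_1_alt. lra.
  - intros m. rewrite <- sqrt_Rsqr_abs. apply sqrt_le_of_le_sqr.
    + apply Rmult_le_pos; [apply sqrt_pos|apply pow_le, sqrt_pos].
    + rewrite Rsqr_pow2, Rpow_mult_distr, pow2_sqrt, <- pow_mult, Nat.mul_comm, pow_mult, pow2_sqrt
        by lra.
      apply H.
Qed.

Lemma choice_below {B : Type} (b0 : B) n (P : nat -> B -> Prop) :
  (forall k, (k < n)%nat -> exists b, P k b) -> exists f : nat -> B, forall k, (k < n)%nat -> P k (f k).
Proof.
  intros H. destruct (functional_choice (fun (k : nat) (b : B) => (k < n)%nat -> P k b)) as [f Hf].
  - intros k. destruct (Nat.lt_ge_cases k n) as [Hk|Hk].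
    + destruct (H k Hk) as [b Hb]. exists b. auto.
    + exists b0. intros; lia.
  - exists f. auto.
Qed.

Definition W_cv (M : mesh) (w : nat -> W) (ws : W) : Prop :=
  forall k, (k < nel M)%nat -> Un_cv (fun i => w i k) (ws k).

Definition rt_cv (d : nat) (M : mesh) (v : nat -> rt) (vs : rt) : Prop :=
  forall k, (k < nel M)%nat -> Un_cv (fun i => rtb (v i) k) (rtb vs k) /\
    forall c, (c < d)%nat -> Un_cv (fun i => rta (v i) k c) (rta vs k c).

Lemma W_cv_of_geometric d M (w : nat -> W) A r :
  (forall k, (k < nel M)%nat -> 0 < vol d (elt M k)) -> 0 <= A -> 0 <= r < 1 ->
  (forall m, ipW d M (Wsub (w (S m)) (w m)) (Wsub (w (S m)) (w m)) <= A * r^m) ->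
  exists ws, W_cv M w ws.
Proof.
  intros Hvol HA Hr H. apply (choice_below 0 (nel M) (fun k l => Un_cv (fun i => w i k) l)).
  intros k Hk. specialize (Hvol k Hk).
  apply (cv_of_sqr_increments _ (A / vol d (elt M k)) r); auto.
  - apply Rle_mult_inv_pos; auto.
  - intros m. pose proof (vol_sqr_le_ipW d M (Wsub (w (S m)) (w m)) k Hk). specialize (H m).
    apply Rmult_le_reg_l with (vol d (elt M k)); auto.
    replace (vol d (elt M k) * (A / vol d (elt M k) * r ^ m)) with (A * r^m) by (field; lra).
    unfold Wsub in *. lra.
Qed.

Lemma det_first_row_zero n (Mx : nat -> nat -> R) : (forall c, (c <= n)%nat -> Mx O c = 0) ->
  det (S n) Mx = 0.
Proof.
  intros H. cbn [det]. rewrite <- (sumR_0 (S n)). apply sumR_ext; intros.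
  rewrite H by lia. ring.
Qed.

Lemma first_edge_nonzero d (T : simplex) : (1 <= d)%nat -> 0 < vol d T ->
  exists c, (c < d)%nat /\ T 1%nat c <> T O c.
Proof.
  intros Hd HV. apply NNPP. intros Hn. destruct d as [|d]; [lia|].
  assert (Hdet : det (S d) (fun r c => T (S r) c - T O c) = 0).
  { apply det_first_row_zero. intros c Hc.
    destruct (Req_dec (T 1%nat c) (T O c)); [lra|]. exfalso. apply Hn. exists c. split; [lia|auto]. }
  unfold vol in HV. rewrite Hdet, Rabs_R0 in HV. unfold Rdiv in HV. rewrite Rmult_0_l in HV. lra.
Qed.

Section RTCoefficients.

Variables (d : nat) (M : mesh) (k : nat).
Hypotheses (Hd : (1 <= d)%nat) (Hk : (k < nel M)%nat) (HV : 0 < vol d (elt M k)).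

Let vertex_coef := INR (S d) * INR (S (S d)) / vol d (elt M k).

Lemma vertex_coef_ge0 : 0 <= vertex_coef.
Proof. apply Rle_mult_inv_pos; auto. apply Rmult_le_pos; apply pos_INR. Qed.

Lemma rt_vertex_sqr_le v j c : (j <= d)%nat -> (c < d)%nat ->
  (rt_eval v k (elt M k j) c)^2 <= vertex_coef * ipV d M v v.
Proof.
  intros Hj Hc. eapply Rle_trans; [apply sqr_coord_le_dot; eauto|].
  eapply Rle_trans; [apply vertex_dot_le_int_dot; eauto|].
  apply Rmult_le_compat_l; [apply vertex_coef_ge0|].
  rewrite ipV_sum. apply (sumR_term_le _ (fun k => ipV_elem d M k v v)); auto.
  intros; apply ipV_elem_ge0.
Qed.

Lemma rtb_sqr_le_ipV : exists cb, 0 <= cb /\ forall v, (rtb v k)^2 <= cb * ipV d M v v.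
Proof.
  destruct (first_edge_nonzero d (elt M k)) as (c & Hc & Hne); auto.
  set (delta := elt M k 1%nat c - elt M k O c).
  assert (Hdelta0 : delta <> 0) by (unfold delta; lra).
  assert (Hdelta : 0 < delta^2) by (rewrite <- Rsqr_pow2; apply Rsqr_pos_lt; auto).
  exists (4 * vertex_coef / delta^2).
  split; [apply Rle_mult_inv_pos; auto; pose proof vertex_coef_ge0; lra|]. intros v.
  (* the slope is read off the difference of the values at the first two vertices *)
  assert (E : rtb v k * delta = rt_eval v k (elt M k 1%nat) c - rt_eval v k (elt M k O) c)
    by (unfold rt_eval, delta; ring).
  pose proof (rt_vertex_sqr_le v 1 c ltac:(lia) Hc). pose proof (rt_vertex_sqr_le v O c ltac:(lia) Hc).
  pose proof (pow2_ge_0 (rt_eval v k (elt M k 1%nat) c + rt_eval v k (elt M k O) c)).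
  apply Rmult_le_reg_r with (delta^2); auto.
  replace (4 * vertex_coef / delta ^ 2 * ipV d M v v * delta ^ 2) with (4 * (vertex_coef * ipV d M v v))
    by (field; auto).
  rewrite <- Rpow_mult_distr, E. nra.
Qed.

Lemma rta_sqr_le_ipV c : (c < d)%nat ->
  exists ca, 0 <= ca /\ forall v, (rta v k c)^2 <= ca * ipV d M v v.
Proof.
  intros Hc. destruct rtb_sqr_le_ipV as (cb & Hcb0 & Hcb).
  exists (2 * vertex_coef + 2 * (elt M k O c)^2 * cb). split.
  { pose proof vertex_coef_ge0. pose proof (pow2_ge_0 (elt M k O c)).
    assert (0 <= (elt M k O c)^2 * cb) by (apply Rmult_le_pos; auto). lra. }
  intros v. replace (rta v k c) with (rt_eval v k (elt M k O) c - rtb v k * elt M k O c)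
    by (unfold rt_eval; ring).
  pose proof (rt_vertex_sqr_le v O c ltac:(lia) Hc).
  assert ((rtb v k * elt M k O c)^2 <= (elt M k O c)^2 * cb * ipV d M v v).
  { rewrite Rpow_mult_distr, Rmult_comm, Rmult_assoc. apply Rmult_le_compat_l; auto. apply pow2_ge_0. }
  pose proof (pow2_ge_0 (rt_eval v k (elt M k O) c + rtb v k * elt M k O c)). nra.
Qed.

End RTCoefficients.

Lemma rt_cv_of_geometric d M (v : nat -> rt) A r : (1 <= d)%nat ->
  (forall k, (k < nel M)%nat -> 0 < vol d (elt M k)) -> 0 <= A -> 0 <= r < 1 ->
  (forall m, ipV d M (rt_sub (v (S m)) (v m)) (rt_sub (v (S m)) (v m)) <= A * r^m) ->
  exists vs, rt_cv d M v vs.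
Proof.
  intros Hd Hvol HA Hr H.
  assert (Hcoef : forall (coef : rt -> R) ck, 0 <= ck -> (forall w, (coef w)^2 <= ck * ipV d M w w) ->
            (forall w w', coef (rt_sub w w') = coef w - coef w') ->
            exists l, Un_cv (fun i => coef (v i)) l).
  { intros coef ck Hck0 Hck Hlin. apply (cv_of_sqr_increments _ (ck * A) r); auto.
    - apply Rmult_le_pos; auto.
    - intros m. rewrite <- Hlin, Rmult_assoc. eapply Rle_trans; [apply Hck|].
      apply Rmult_le_compat_l; auto. }
  destruct (choice_below 0 (nel M) (fun k b => Un_cv (fun i => rtb (v i) k) b)) as [b Hb].
  { intros k Hk. destruct (rtb_sqr_le_ipV d M k) as (cb & Hcb0 & Hcb); auto.
    apply (Hcoef (fun w => rtb w k) cb); auto. }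
  destruct (choice_below (fun _ => 0) (nel M)
    (fun k a => forall c, (c < d)%nat -> Un_cv (fun i => rta (v i) k c) (a c))) as [a Ha].
  { intros k Hk. apply (choice_below 0 d (fun c l => Un_cv (fun i => rta (v i) k c) l)). intros c Hc.
    destruct (rta_sqr_le_ipV d M k Hd Hk (Hvol k Hk) c Hc) as (ca & Hca0 & Hca).
    apply (Hcoef (fun w => rta w k c) ca); auto. }
  exists {| rta := a; rtb := b |}. intros k Hk. split; [apply Hb|apply Ha]; auto.
Qed.

Lemma cv_sumR n (F : nat -> nat -> R) G : (forall k, (k < n)%nat -> Un_cv (fun i => F i k) (G k)) ->
  Un_cv (fun i => sumR n (F i)) (sumR n G).
Proof.
  induction n; intros H; simpl; [apply cv_const|].
  apply CV_plus; [apply IHn; intros; apply H; lia|apply H; lia].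
Qed.

Lemma dot_cv d (X Y : nat -> pt) Xs Ys :
  (forall c, (c < d)%nat -> Un_cv (fun i => X i c) (Xs c)) ->
  (forall c, (c < d)%nat -> Un_cv (fun i => Y i c) (Ys c)) ->
  Un_cv (fun i => dot d (X i) (Y i)) (dot d Xs Ys).
Proof. intros H1 H2. apply (cv_sumR d (fun i c => X i c * Y i c)). intros; apply CV_mult; auto. Qed.

Lemma rt_eval_cv d M v vs k x c : rt_cv d M v vs -> (k < nel M)%nat -> (c < d)%nat ->
  Un_cv (fun i => rt_eval (v i) k x c) (rt_eval vs k x c).
Proof.
  intros H Hk Hc. destruct (H k Hk) as [Hb Ha]. unfold rt_eval.
  apply CV_plus; [auto|apply CV_mult; [auto|apply cv_const]].
Qed.

Lemma int_dot_cv d T (F G : nat -> pt -> pt) Fs Gs :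
  (forall j c, (j <= d)%nat -> (c < d)%nat -> Un_cv (fun i => F i (T j) c) (Fs (T j) c)) ->
  (forall j c, (j <= d)%nat -> (c < d)%nat -> Un_cv (fun i => G i (T j) c) (Gs (T j) c)) ->
  Un_cv (fun i => int_dot d T (F i) (G i)) (int_dot d T Fs Gs).
Proof.
  intros H1 H2. apply CV_mult; [apply cv_const|]. apply CV_plus.
  - apply (cv_sumR (S d) (fun i j => dot d (F i (T j)) (G i (T j)))). intros j Hj.
    apply dot_cv; intros; [apply H1|apply H2]; auto; lia.
  - apply dot_cv; intros c Hc; apply (cv_sumR (S d) (fun i j => _ i (T j) c)); intros;
      [apply H1|apply H2]; auto; lia.
Qed.

Lemma ipW_cv d M (f w : nat -> W) fs ws : W_cv M f fs -> W_cv M w ws ->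
  Un_cv (fun i => ipW d M (f i) (w i)) (ipW d M fs ws).
Proof.
  intros Hf Hw. apply (cv_sumR _ (fun i k => vol d (elt M k) * f i k * w i k)). intros k Hk.
  repeat apply CV_mult; auto using cv_const.
Qed.

Lemma ipWdiv_cv d M (w : nat -> W) ws v vs : W_cv M w ws -> rt_cv d M v vs ->
  Un_cv (fun i => ipWdiv d M (w i) (v i)) (ipWdiv d M ws vs).
Proof.
  intros Hw Hv. apply (cv_sumR _ (fun i k => vol d (elt M k) * w i k * (INR d * rtb (v i) k))).
  intros k Hk. repeat apply CV_mult; auto using cv_const. apply Hv; auto.
Qed.

Lemma ipVw_cv d M (g : nat -> W) gs u us v vs : W_cv M g gs -> rt_cv d M u us -> rt_cv d M v vs ->
  Un_cv (fun i => ipVw d M (g i) (u i) (v i)) (ipVw d M gs us vs).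
Proof.
  intros Hg Hu Hv.
  apply (cv_sumR _ (fun i k => g i k * int_dot d (elt M k) (rt_eval (u i) k) (rt_eval (v i) k))).
  intros k Hk. apply CV_mult; auto.
  apply (int_dot_cv d (elt M k) (fun i => rt_eval (u i) k) (fun i => rt_eval (v i) k));
    intros; apply (rt_eval_cv d M); auto.
Qed.

Lemma ipFV_cv d M (F : nat -> nat -> pt) Fs v vs :
  (forall k c, (k < nel M)%nat -> (c < d)%nat -> Un_cv (fun i => F i k c) (Fs k c)) -> rt_cv d M v vs ->
  Un_cv (fun i => ipFV d M (F i) (v i)) (ipFV d M Fs vs).
Proof.
  intros HF Hv.
  apply (cv_sumR _ (fun i k => vol d (elt M k) / INR (S d) *
    sumR (S d) (fun j => dot d (F i k) (rt_eval (v i) k (elt M k j))))).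
  intros k Hk. apply CV_mult; [apply cv_const|].
  apply (cv_sumR _ (fun i j => dot d (F i k) (rt_eval (v i) k (elt M k j)))). intros j Hj.
  apply dot_cv; intros; auto. apply (rt_eval_cv d M); auto.
Qed.

Lemma W_cv_const M w : W_cv M (fun _ => w) w.
Proof. intros k _. apply cv_const. Qed.

Lemma rt_cv_const d M v : rt_cv d M (fun _ => v) v.
Proof. intros k _. split; intros; apply cv_const. Qed.

Lemma W_cv_sub M w ws w' ws' : W_cv M w ws -> W_cv M w' ws' ->
  W_cv M (fun i => Wsub (w i) (w' i)) (Wsub ws ws').
Proof. intros H H' k Hk. apply CV_minus; auto. Qed.

Lemma rt_cv_sub d M v vs v' vs' : rt_cv d M v vs -> rt_cv d M v' vs' ->
  rt_cv d M (fun i => rt_sub (v i) (v' i)) (rt_sub vs vs').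
Proof.
  intros H H' k Hk. destruct (H k Hk) as [Hb Ha], (H' k Hk) as [Hb' Ha']. simpl.
  split; [|intros]; apply CV_minus; auto.
Qed.

Lemma normW_sub_cv0 d M w ws : W_cv M w ws -> Un_cv (fun i => normW d M (Wsub (w i) ws)) 0.
Proof.
  intros H. replace 0 with (sqrt (ipW d M (Wsub ws ws) (Wsub ws ws))).
  - apply continuity_seq; [apply continuity_pt_sqrt, ipW_ge0|].
    apply ipW_cv; apply W_cv_sub; auto using W_cv_const.
  - unfold Wsub. rewrite ipW_sub_l, Rminus_diag. apply sqrt_0.
Qed.

Lemma normV_sub_cv0 d M v vs : rt_cv d M v vs -> Un_cv (fun i => normV d M (rt_sub (v i) vs)) 0.
Proof.
  intros H. replace 0 with (sqrt (ipV d M (rt_sub vs vs) (rt_sub vs vs))).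
  - apply continuity_seq; [apply continuity_pt_sqrt, ipV_ge0|].
    apply (ipVw_cv d M (fun _ _ => 1)); auto using W_cv_const, rt_cv_sub, rt_cv_const.
  - unfold ipV. rewrite ipVw_sub_l, Rminus_diag. apply sqrt_0.
Qed.

Lemma limits_eq a b la lb : (forall i, a i = b i) -> Un_cv a la -> Un_cv b lb -> la = lb.
Proof. intros H Ha Hb. apply (UL_sequence b); auto. apply (Un_cv_ext a); auto. Qed.

Lemma in_Vh_closed d M v vs : rt_cv d M v vs -> (forall i, in_Vh d M (v i)) -> in_Vh d M vs.
Proof.
  intros Hc Hv k k' j0 Hk Hk' Hne Hj0 Hsh y Hy j Hj Hjj.
  apply (limits_eq (fun i => dot d y (rt_eval (v i) k (elt M k j)))
                   (fun i => dot d y (rt_eval (v i) k' (elt M k j)))).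
  - intros i. apply (Hv i k k' j0); auto.
  - apply (dot_cv d (fun _ => y)); intros; [apply cv_const|apply (rt_eval_cv d M); auto].
  - apply (dot_cv d (fun _ => y)); intros; [apply cv_const|apply (rt_eval_cv d M); auto].
Qed.

(** * The L-scheme *)

Lemma normW_Lip_le d M f c (x y : W) : Lip f c ->
  normW d M (fun k => f (x k) - f (y k)) <= c * normW d M (Wsub x y).
Proof.
  intros H. pose proof (Lip_ge0 f c H). apply sqrt_le_of_le_sqr.
  - apply Rmult_le_pos; [auto|apply normW_ge0].
  - rewrite Rpow_mult_distr, normW_sqr. apply ipW_Lip_le; auto.
Qed.

Definition darcy_const (Mu La Lf3 : R) : R := La * Rabs Mu + Lf3.

Definition u_const (a_lo a_hi C Mu La Lf2 Lf3 : R) : R := u_coef a_lo a_hi C Lf2 (darcy_const Mu La Lf3).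

Definition p_const (a_lo a_hi C Mu La Lf2 Lf3 : R) : R :=
  C * (a_hi * u_const a_lo a_hi C Mu La Lf2 Lf3 + darcy_const Mu La Lf3).

(* [rho_const] bounds the flux residual: the velocity increment weighted by [fw], plus the
   perturbations of [fw] and [f1] caused by the saturation increment. *)
Definition rho_const (a_lo a_hi C Mu Fw La Lfw Lf1 Lf2 Lf3 : R) : R :=
  Fw * u_const a_lo a_hi C Mu La Lf2 Lf3 + Lfw * Rabs Mu + Lf1.

Section LScheme.

Variables (d : nat) (M : mesh) (s a fw f2 : R -> R) (f1 f3 : R -> pt)
  (L tau C a_lo a_hi Mu Fw La Lfw Lf1 Lf2 Lf3 : R).
Hypotheses (HL : 0 < L) (Htau : 0 < tau) (HC : 0 < C) (Ha_lo : 0 < a_lo) (Hlohi : a_lo <= a_hi)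
  (Hs_mono : forall x y, x <= y -> s x <= s y) (Hs : Lip s L)
  (Ha : Lip a La) (Ha_bnd : forall x, a_lo <= a x <= a_hi)
  (Hf1 : LipV d f1 Lf1) (Hf2 : Lip f2 Lf2) (Hf3 : LipV d f3 Lf3) (Hfw : Lip fw Lfw)
  (Hfw_bnd : forall x, Rabs (fw x) <= Fw)
  (Hvol : forall k, (k < nel M)%nat -> 0 < vol d (elt M k)) (Hdiv : div_stable d M C).

Let cg := darcy_const Mu La Lf3.
Let cu := u_const a_lo a_hi C Mu La Lf2 Lf3.
Let cp := p_const a_lo a_hi C Mu La Lf2 Lf3.
Let rho := rho_const a_lo a_hi C Mu Fw La Lfw Lf1 Lf2 Lf3.

Lemma darcy_const_ge0 : 0 <= cg.
Proof.
  unfold cg, darcy_const.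
  pose proof (Lip_ge0 a La Ha). pose proof (LipV_ge0 d f3 Lf3 Hf3).
  pose proof (Rabs_pos Mu). assert (0 <= La * Rabs Mu) by (apply Rmult_le_pos; auto). lra.
Qed.

Lemma cu_ge0 : 0 <= cu.
Proof. apply u_coef_ge0; try lra; auto using darcy_const_ge0. apply (Lip_ge0 f2 Lf2 Hf2). Qed.

Lemma cp_ge0 : 0 <= cp.
Proof.
  unfold cp, p_const. fold cg cu. pose proof darcy_const_ge0. pose proof cu_ge0.
  assert (0 <= a_hi * cu) by (apply Rmult_le_pos; lra).
  apply Rmult_le_pos; lra.
Qed.

Lemma rho_ge0 : 0 <= rho.
Proof.
  unfold rho, rho_const. fold cu.
  pose proof (Hfw_bnd 0). pose proof (Rabs_pos (fw 0)). pose proof cu_ge0.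
  pose proof (Lip_ge0 fw Lfw Hfw). pose proof (LipV_ge0 d f1 Lf1 Hf1). pose proof (Rabs_pos Mu).
  assert (0 <= Fw * cu) by (apply Rmult_le_pos; lra).
  assert (0 <= Lfw * Rabs Mu) by (apply Rmult_le_pos; lra). lra.
Qed.

Lemma Lscheme_mass_pointwise Th0 Thp Th q p u :
  Lscheme_step d M s a fw f2 f1 f3 L tau Th0 Thp Th q p u ->
  forall k, (k < nel M)%nat -> L * (Th k - Thp k) + s (Thp k) + tau * divh d q k = s (Th0 k).
Proof.
  intros (_ & _ & Hmass & _) k Hk.
  apply (ipW_inj d M (fun k => L * (Th k - Thp k) + s (Thp k) + tau * divh d q k) (fun k => s (Th0 k)));
    auto.
  intros w. rewrite <- Hmass, ipWdiv_as_ipW. unfold ipW.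
  rewrite <- sumR_scal, <- sumR_add. apply sumR_ext; intros; ring.
Qed.

Lemma Lscheme_div_pointwise Th0 Thp Th q p u :
  Lscheme_step d M s a fw f2 f1 f3 L tau Th0 Thp Th q p u ->
  forall k, (k < nel M)%nat -> divh d u k = f2 (s (Thp k)).
Proof.
  intros (_ & _ & _ & _ & Hdivu & _) k Hk.
  apply (ipW_inj d M (divh d u) (fun k => f2 (s (Thp k)))); auto.
  intros w. rewrite <- Hdivu, ipWdiv_as_ipW. auto.
Qed.

Section TwoSteps.

Variables (Th0 ThA ThB ThC pA pB : W) (qA qB uA uB : rt).
Hypotheses (HA : Lscheme_step d M s a fw f2 f1 f3 L tau Th0 ThB ThA qA pA uA)
  (HB : Lscheme_step d M s a fw f2 f1 f3 L tau Th0 ThC ThB qB pB uB)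
  (HuB : Linf_le d M uB Mu).

Let ds : W := Wsub (fun k => s (ThB k)) (fun k => s (ThC k)).

Lemma saturation_increment_le : normW d M ds <= L * normW d M (Wsub ThB ThC).
Proof. apply normW_Lip_le; auto. Qed.

Lemma Lscheme_velocity_pressure_bound :
  normV d M (rt_sub uA uB) <= cu * normW d M ds /\ normW d M (Wsub pA pB) <= cp * normW d M ds.
Proof.
  set (G := fun v => ipVw d M (fun k => a (s (ThB k)) - a (s (ThC k))) uB v
                     + ipFV d M (fun k c => f3 (s (ThB k)) c - f3 (s (ThC k)) c) v).
  pose proof darcy_const_ge0. pose proof (normW_ge0 d M ds).
  pose proof HA as (_ & HuA & _ & _ & _ & HdA). pose proof HB as (_ & HuB' & _ & _ & _ & HdB).
  assert (Heq : forall v, in_Vh d M v ->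
    ipVw d M (fun k => a (s (ThB k))) (rt_sub uA uB) v - ipWdiv d M (Wsub pA pB) v + G v = 0).
  { intros v Hv. specialize (HdA v Hv). specialize (HdB v Hv). unfold G, Wsub.
    rewrite ipVw_sub_l, ipVw_sub_g, ipWdiv_sub_l,
      (ipFV_sub_F d M (fun k => f3 (s (ThB k))) (fun k => f3 (s (ThC k)))).
    lra. }
  assert (HG : forall v, in_Vh d M v -> Rabs (G v) <= cg * normW d M ds * normV d M v).
  { intros v _. unfold G. eapply Rle_trans; [apply Rabs_triang|].
    pose proof (ipVw_Lip_flow_weight_abs_le d M a La (fun k => s (ThB k)) (fun k => s (ThC k)) uB v Mu Ha HuB)
      as H1.
    pose proof (ipFV_LipV_abs_le d M f3 Lf3 (fun k => s (ThB k)) (fun k => s (ThC k)) v Hf3) as H2.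
    fold ds in H1, H2. unfold cg, darcy_const. lra. }
  assert (Hg : forall k, (k < nel M)%nat -> a_lo <= a (s (ThB k)) <= a_hi) by auto.
  assert (Hu : normV d M (rt_sub uA uB) <= cu * normW d M ds).
  { apply (flow_velocity_bound d M C a_lo a_hi Lf2 cg (normW d M ds)
      (fun k => a (s (ThB k))) (rt_sub uA uB) (Wsub pA pB) (fun k => f2 (s (ThB k)) - f2 (s (ThC k))) G);
      auto using in_Vh_sub; try lra.
    - apply (Lip_ge0 f2 Lf2 Hf2).
    - intros k Hk.
      rewrite divh_sub, (Lscheme_div_pointwise _ _ _ _ _ _ HA), (Lscheme_div_pointwise _ _ _ _ _ _ HB); auto.
    - apply normW_Lip_le; auto. }
  split; auto.
  eapply Rle_trans.
  { apply (flow_pressure_bound d M C a_lo a_hi cg (normW d M ds)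
      (fun k => a (s (ThB k))) (rt_sub uA uB) (Wsub pA pB) G); auto using in_Vh_sub; lra. }
  unfold cp, p_const. fold cg cu. pose proof (Rlt_le _ _ HC).
  assert (a_hi * normV d M (rt_sub uA uB) <= a_hi * (cu * normW d M ds)) by (apply Rmult_le_compat_l; lra).
  replace (C * (a_hi * cu + cg) * normW d M ds)
    with (C * (a_hi * (cu * normW d M ds) + cg * normW d M ds)) by ring.
  apply Rmult_le_compat_l; lra.
Qed.

Lemma Lscheme_flux_residual_bound v : in_Vh d M v ->
  Rabs (ipV d M (rt_sub qA qB) v - ipWdiv d M (Wsub ThA ThB) v) <= rho * normW d M ds * normV d M v.
Proof.
  intros Hv. pose proof HA as (_ & _ & _ & HfA & _). pose proof HB as (_ & _ & _ & HfB & _).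
  specialize (HfA v Hv). specialize (HfB v Hv).
  assert (E : ipV d M (rt_sub qA qB) v - ipWdiv d M (Wsub ThA ThB) v =
    ipVw d M (fun k => fw (s (ThB k))) (rt_sub uA uB) v
    + ipVw d M (fun k => fw (s (ThB k)) - fw (s (ThC k))) uB v
    + ipFV d M (fun k i => f1 (s (ThB k)) i - f1 (s (ThC k)) i) v).
  { unfold ipV in *. unfold Wsub.
    rewrite !ipVw_sub_l, ipVw_sub_g, ipWdiv_sub_l,
      (ipFV_sub_F d M (fun k => f1 (s (ThB k))) (fun k => f1 (s (ThC k)))).
    lra. }
  rewrite E. destruct Lscheme_velocity_pressure_bound as [Hu _].
  assert (HFw : 0 <= Fw) by (pose proof (Hfw_bnd 0); pose proof (Rabs_pos (fw 0)); lra).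
  pose proof (ipVw_abs_le_bounded d M (fun k => fw (s (ThB k))) (rt_sub uA uB) v Fw HFw
    (fun k _ => Hfw_bnd _)).
  pose proof (ipVw_Lip_flow_weight_abs_le d M fw Lfw (fun k => s (ThB k)) (fun k => s (ThC k)) uB v Mu Hfw HuB)
    as H1.
  pose proof (ipFV_LipV_abs_le d M f1 Lf1 (fun k => s (ThB k)) (fun k => s (ThC k)) v Hf1) as H2.
  fold ds in H1, H2. pose proof (normV_ge0 d M v).
  assert (Fw * normV d M (rt_sub uA uB) * normV d M v <= Fw * (cu * normW d M ds) * normV d M v).
  { apply Rmult_le_compat_r; [auto|]. apply Rmult_le_compat_l; auto. }
  eapply Rle_trans; [apply Rabs_triang|]. eapply Rle_trans; [apply Rplus_le_compat_r, Rabs_triang|].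
  unfold rho, rho_const. fold cu. nra.
Qed.

Lemma Lscheme_contraction : 3 * L * rho^2 * tau <= 1 ->
  ipW d M (Wsub ThA ThB) (Wsub ThA ThB)
    <= 3 * C^2 * L / (3 * C^2 * L + tau) * ipW d M (Wsub ThB ThC) (Wsub ThB ThC) /\
  ipV d M (rt_sub qA qB) (rt_sub qA qB)
    <= (L / tau + rho^2 * L^2) * ipW d M (Wsub ThB ThC) (Wsub ThB ThC).
Proof.
  intros Hsmall. pose proof rho_ge0.
  pose proof (in_Vh_sub d M qA qB (proj1 HA) (proj1 HB)) as Hdq.
  assert (Hmass : forall k, (k < nel M)%nat ->
    L * (Wsub ThA ThB k - Wsub ThB ThC k) + ds k + tau * divh d (rt_sub qA qB) k = 0).
  { intros k Hk. unfold ds, Wsub. rewrite divh_sub.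
    pose proof (Lscheme_mass_pointwise _ _ _ _ _ _ HA k Hk).
    pose proof (Lscheme_mass_pointwise _ _ _ _ _ _ HB k Hk). lra. }
  assert (Hds : forall k, (k < nel M)%nat -> (ds k)^2 <= L * ds k * Wsub ThB ThC k)
    by (intros; apply monotone_Lip_sqr_le; auto).
  pose proof (mass_flux_energy d M L tau rho _ _ _ _ HL Htau Hmass Hds
    (Lscheme_flux_residual_bound _ Hdq)) as Henergy.
  assert (Hinf : normW d M (Wsub ThA ThB) <= C * (normV d M (rt_sub qA qB) + rho * normW d M ds)).
  { apply (div_stable_bound d M C _ (fun v => ipV d M (rt_sub qA qB) v
      - (ipV d M (rt_sub qA qB) v - ipWdiv d M (Wsub ThA ThB) v))); auto; try lra.
    - pose proof (normV_ge0 d M (rt_sub qA qB)). pose proof (normW_ge0 d M ds).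
      assert (0 <= rho * normW d M ds) by (apply Rmult_le_pos; auto). lra.
    - intros v _. ring.
    - intros v Hv. eapply Rle_trans; [apply Rabs_triang|]. rewrite Rabs_Ropp.
      pose proof (ipV_abs_le d M (rt_sub qA qB) v). pose proof (Lscheme_flux_residual_bound v Hv). nra. }
  rewrite <- (normW_sqr d M (Wsub ThA ThB)), <- (normV_sqr d M (rt_sub qA qB)),
    <- (normW_sqr d M ds) in Henergy.
  rewrite <- (normW_sqr d M (Wsub ThA ThB)), <- (normV_sqr d M (rt_sub qA qB)).
  split.
  - apply (contraction_of_energy L tau C rho _ (normV d M (rt_sub qA qB)) (normW d M ds));
      auto using normW_ge0, normV_ge0.
  - apply (flux_bound_of_energy L tau rho (normW d M (Wsub ThA ThB)) _ (normW d M ds)); auto.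
    rewrite <- normW_sqr, <- Rpow_mult_distr. apply pow_incr.
    split; [apply normW_ge0|apply saturation_increment_le].
Qed.

End TwoSteps.

Section Iterates.

Variables (Th : nat -> W) (q : nat -> rt) (p : nat -> W) (u : nat -> rt).
Hypotheses
  (Hsteps : forall i,
     Lscheme_step d M s a fw f2 f1 f3 L tau (Th O) (Th i) (Th (S i)) (q (S i)) (p (S i)) (u (S i)))
  (HLinf : forall i, Linf_le d M (u (S i)) Mu)
  (Hsmall : 3 * L * rho^2 * tau <= 1).

Let r := 3 * C^2 * L / (3 * C^2 * L + tau).
Let incr m := ipW d M (Wsub (Th (S m)) (Th m)) (Wsub (Th (S m)) (Th m)).

Lemma rate_lt_1 : 0 <= r < 1.
Proof.
  assert (0 < 3 * C^2 * L) by (pose proof (pow_lt C 2 HC); nra). unfold r. split.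
  - apply Rle_mult_inv_pos; lra.
  - apply Rmult_lt_reg_r with (3 * C^2 * L + tau); [lra|].
    unfold Rdiv. rewrite Rmult_assoc, Rinv_l, Rmult_1_r, Rmult_1_l by lra. lra.
Qed.

Lemma iterate_bounds m :
  incr (S m) <= r * incr m /\
  ipV d M (rt_sub (q (S (S m))) (q (S m))) (rt_sub (q (S (S m))) (q (S m)))
    <= (L / tau + rho^2 * L^2) * incr m /\
  ipV d M (rt_sub (u (S (S m))) (u (S m))) (rt_sub (u (S (S m))) (u (S m))) <= (cu * L)^2 * incr m /\
  ipW d M (Wsub (p (S (S m))) (p (S m))) (Wsub (p (S (S m))) (p (S m))) <= (cp * L)^2 * incr m.
Proof.
  destruct (Lscheme_contraction _ _ _ _ _ _ _ _ _ _ (Hsteps (S m)) (Hsteps m) (HLinf m) Hsmall)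
    as [Hcontr Hflux].
  destruct (Lscheme_velocity_pressure_bound _ _ _ _ _ _ _ _ _ _ (Hsteps (S m)) (Hsteps m) (HLinf m))
    as [Hu Hp].
  pose proof (saturation_increment_le (Th (S m)) (Th m)) as Hsat.
  assert (Hsq : forall c x, 0 <= c -> 0 <= x ->
    x <= c * normW d M (Wsub (fun k => s (Th (S m) k)) (fun k => s (Th m k))) -> x^2 <= (c * L)^2 * incr m).
  { intros c x Hc Hx H. unfold incr. rewrite <- normW_sqr, <- Rpow_mult_distr. apply pow_incr.
    split; auto. eapply Rle_trans; [exact H|]. rewrite Rmult_assoc. apply Rmult_le_compat_l; auto. }
  pose proof cu_ge0.
  pose proof cp_ge0.
  repeat split; auto.
  - rewrite <- normV_sqr. apply Hsq; auto using normV_ge0.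
  - rewrite <- normW_sqr. apply Hsq; auto using normW_ge0.
Qed.

Lemma incr_geometric m : incr m <= r^m * incr O.
Proof.
  induction m as [|m IH]; simpl; [lra|].
  pose proof rate_lt_1. eapply Rle_trans; [apply (iterate_bounds m)|].
  rewrite Rmult_assoc. apply Rmult_le_compat_l; lra.
Qed.

Lemma scaled_incr_geometric c m : 0 <= c -> c * incr m <= c * incr O * r^m.
Proof.
  intros Hc. rewrite Rmult_assoc, (Rmult_comm (incr O)). apply Rmult_le_compat_l; auto.
  apply incr_geometric.
Qed.

Lemma iterates_converge : (1 <= d)%nat ->
  exists Ths qs ps us, W_cv M Th Ths /\ rt_cv d M (fun i => q (S i)) qs /\
    W_cv M (fun i => p (S i)) ps /\ rt_cv d M (fun i => u (S i)) us.
Proof.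
  intros Hd. pose proof rate_lt_1. pose proof (ipW_ge0 d M (Wsub (Th 1%nat) (Th O))) as H0.
  assert (Hq0 : 0 <= L / tau + rho^2 * L^2).
  { assert (0 <= L / tau) by (apply Rle_mult_inv_pos; lra).
    assert (0 <= rho^2 * L^2) by (apply Rmult_le_pos; apply pow2_ge_0). lra. }
  destruct (W_cv_of_geometric d M Th (incr O) r) as [Ths HTh]; auto.
  { intros m. rewrite Rmult_comm. apply incr_geometric. }
  destruct (rt_cv_of_geometric d M (fun i => q (S i)) ((L / tau + rho^2 * L^2) * incr O) r) as [qs Hq];
    auto using Rmult_le_pos.
  { intros m. eapply Rle_trans; [apply iterate_bounds|]. apply scaled_incr_geometric; auto. }
  destruct (rt_cv_of_geometric d M (fun i => u (S i)) ((cu * L)^2 * incr O) r) as [us Hu];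
    auto using Rmult_le_pos, pow2_ge_0.
  { intros m. eapply Rle_trans; [apply iterate_bounds|]. apply scaled_incr_geometric, pow2_ge_0. }
  destruct (W_cv_of_geometric d M (fun i => p (S i)) ((cp * L)^2 * incr O) r) as [ps Hp];
    auto using Rmult_le_pos, pow2_ge_0.
  { intros m. eapply Rle_trans; [apply iterate_bounds|]. apply scaled_incr_geometric, pow2_ge_0. }
  exists Ths, qs, ps, us. auto.
Qed.

Section Limit.

Variables (Ths : W) (qs : rt) (ps : W) (us : rt).
Hypotheses (HTh : W_cv M Th Ths) (Hq : rt_cv d M (fun i => q (S i)) qs)
  (Hp : W_cv M (fun i => p (S i)) ps) (Hu : rt_cv d M (fun i => u (S i)) us).

Lemma saturation_cv f c : Lip f c -> W_cv M (fun i k => f (s (Th i k))) (fun k => f (s (Ths k))).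
Proof. intros Hf k Hk. apply (cv_Lip f c); auto. apply (cv_Lip s L); auto. Qed.

Lemma saturation_cvV f c : LipV d f c -> forall k i, (k < nel M)%nat -> (i < d)%nat ->
  Un_cv (fun n => f (s (Th n k)) i) (f (s (Ths k)) i).
Proof. intros Hf k i Hk Hi. apply (cv_LipV d f c); auto. apply (cv_Lip s L); auto. Qed.

Lemma limit_mass w : ipW d M (fun k => s (Ths k) - s (Th O k)) w + tau * ipWdiv d M w qs = 0.
Proof.
  assert (HThS : W_cv M (fun i => Th (S i)) Ths)
    by (intros k Hk; apply (cv_shift (fun i => Th i k)), HTh; auto).
  assert (Hlim : ipW d M (fun k => L * (Ths k - Ths k) + s (Ths k)) w + tau * ipWdiv d M w qs
                 = ipW d M (fun k => s (Th O k)) w).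
  { apply (limits_eq
      (fun i => ipW d M (fun k => L * (Th (S i) k - Th i k) + s (Th i k)) w + tau * ipWdiv d M w (q (S i)))
      (fun _ => ipW d M (fun k => s (Th O k)) w)); [|apply CV_plus|apply cv_const].
    - intros i. destruct (Hsteps i) as (_ & _ & Hmass & _). apply Hmass.
    - apply ipW_cv; [|apply W_cv_const]. intros k Hk.
      apply CV_plus; [apply CV_mult; [apply cv_const|apply CV_minus; auto]|apply (cv_Lip s L); auto].
    - apply CV_mult; [apply cv_const|apply ipWdiv_cv; auto using W_cv_const]. }
  assert (E : ipW d M (fun k => L * (Ths k - Ths k) + s (Ths k)) w = ipW d M (fun k => s (Ths k)) w)
    by (apply sumR_ext; intros; ring).
  rewrite ipW_sub_l, <- Hlim, E. ring.
Qed.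

Lemma limit_flux v : in_Vh d M v ->
  ipV d M qs v - ipWdiv d M Ths v - ipVw d M (fun k => fw (s (Ths k))) us v
  = ipFV d M (fun k => f1 (s (Ths k))) v.
Proof.
  intros Hv. apply (limits_eq
    (fun i => ipV d M (q (S i)) v - ipWdiv d M (Th (S i)) v - ipVw d M (fun k => fw (s (Th i k))) (u (S i)) v)
    (fun i => ipFV d M (fun k => f1 (s (Th i k))) v)).
  - intros i. destruct (Hsteps i) as (_ & _ & _ & Hflux & _). apply Hflux; auto.
  - repeat apply CV_minus.
    + apply (ipVw_cv d M (fun _ _ => 1)); auto using W_cv_const, rt_cv_const.
    + apply ipWdiv_cv; [intros k Hk; apply (cv_shift (fun i => Th i k)), HTh; auto|apply rt_cv_const].
    + apply ipVw_cv; [apply (saturation_cv fw Lfw Hfw)|auto|apply rt_cv_const].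
  - apply ipFV_cv; [apply (saturation_cvV f1 Lf1 Hf1)|apply rt_cv_const].
Qed.

Lemma limit_div w : ipWdiv d M w us = ipW d M (fun k => f2 (s (Ths k))) w.
Proof.
  apply (limits_eq (fun i => ipWdiv d M w (u (S i))) (fun i => ipW d M (fun k => f2 (s (Th i k))) w)).
  - intros i. destruct (Hsteps i) as (_ & _ & _ & _ & Hdivu & _). apply Hdivu.
  - apply ipWdiv_cv; auto using W_cv_const.
  - apply ipW_cv; [apply (saturation_cv f2 Lf2 Hf2)|apply W_cv_const].
Qed.

Lemma limit_darcy v : in_Vh d M v ->
  ipVw d M (fun k => a (s (Ths k))) us v - ipWdiv d M ps v + ipFV d M (fun k => f3 (s (Ths k))) v = 0.
Proof.
  intros Hv. apply (limits_eq
    (fun i => ipVw d M (fun k => a (s (Th i k))) (u (S i)) v - ipWdiv d M (p (S i)) v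
              + ipFV d M (fun k => f3 (s (Th i k))) v)
    (fun _ => 0)); [|apply CV_plus; [apply CV_minus|]|apply cv_const].
  - intros i. destruct (Hsteps i) as (_ & _ & _ & _ & _ & Hdarcy). apply Hdarcy; auto.
  - apply ipVw_cv; [apply (saturation_cv a La Ha)|auto|apply rt_cv_const].
  - apply ipWdiv_cv; [auto|apply rt_cv_const].
  - apply ipFV_cv; [apply (saturation_cvV f3 Lf3 Hf3)|apply rt_cv_const].
Qed.

Lemma limit_solves_Ph_n : Ph_n d M s a fw f2 f1 f3 tau (Th O) Ths qs ps us.
Proof.
  split; [|split]; [apply (in_Vh_closed d M _ _ Hq)|apply (in_Vh_closed d M _ _ Hu)|].
  - intros i. apply (Hsteps i).
  - intros i. apply (Hsteps i).
  - repeat split; auto using limit_mass, limit_flux, limit_div, limit_darcy.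
Qed.

End Limit.

End Iterates.

End LScheme.

Lemma mul_le_1_of_le_inv X tau : 0 <= X -> 0 < tau -> tau <= 1 / (X + 1) -> X * tau <= 1.
Proof.
  intros HX Htau H. apply Rmult_le_compat_r with (r := X + 1) in H; [|lra].
  replace (1 / (X + 1) * (X + 1)) with 1 in H by (field; lra). nra.
Qed.

Theorem theorem4p1
  (d : nat) (L a_lo a_hi Mu Fw La Lfw Lf1 Lf2 Lf3 C : R) :
  (1 <= d)%nat -> 0 < L -> 0 < a_lo -> a_lo <= a_hi -> 0 < C ->
  exists K : R, 0 < K /\
  forall (s a fw f2 : R -> R) (f1 f3 : R -> pt) (Ls : R),
    (* (A1) *)
    (forall x, 0 <= s x <= 1) -> (forall x y, x <= y -> s x <= s y) ->
    0 <= Ls -> Lip s Ls -> Ls <= L ->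
    (* (A2) *)
    Lip a La -> (forall x, a_lo <= a x <= a_hi) ->
    (* (A3) *)
    LipV d f1 Lf1 -> Lip f2 Lf2 -> LipV d f3 Lf3 -> Lip fw Lfw ->
    (forall x, Rabs (fw x) <= Fw) ->
  forall M : mesh, conforming d M -> div_stable d M C ->
  forall tau : R, 0 < tau -> tau <= 1 / K ->
  forall (Th : nat -> W) (q : nat -> rt) (p : nat -> W) (u : nat -> rt),
    (* Th 0 = Theta_h^{n-1}; iterates of P_h^{n,i} for i >= 1 *)
    (forall i, (1 <= i)%nat ->
       Lscheme_step d M s a fw f2 f1 f3 L tau (Th O) (Th (i - 1)%nat) (Th i) (q i) (p i) (u i)) ->
    (* (A4) *)
    (forall i, (1 <= i)%nat -> Linf_le d M (u i) Mu) ->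
    (forall i, (2 <= i)%nat ->
       Rsqr (normW d M (Wsub (Th i) (Th (i - 1)%nat)))
       <= 3 * C ^ 2 * L / (3 * C ^ 2 * L + tau)
          * Rsqr (normW d M (Wsub (Th (i - 1)%nat) (Th (i - 2)%nat)))) /\
    exists (Ths : W) (qs : rt) (ps : W) (us : rt),
      Un_cv (fun i => normW d M (Wsub (Th i) Ths)) 0 /\
      Un_cv (fun i => normV d M (rt_sub (q i) qs)) 0 /\
      Un_cv (fun i => normW d M (Wsub (p i) ps)) 0 /\
      Un_cv (fun i => normV d M (rt_sub (u i) us)) 0 /\
      Ph_n d M s a fw f2 f1 f3 tau (Th O) Ths qs ps us.
Proof.
  intros Hd HL Hlo Hlohi HC.
  set (rho := rho_const a_lo a_hi C Mu Fw La Lfw Lf1 Lf2 Lf3).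
  assert (HK : 0 <= 3 * L * rho^2) by (apply Rmult_le_pos; [lra|apply pow2_ge_0]).
  exists (3 * L * rho^2 + 1). split; [lra|].
  intros s a fw f2 f1 f3 Ls _ Hmono _ HLs HLsL HLa Ha HLf1 HLf2 HLf3 HLfw HFw M Hconf Hdiv
    tau Htau HtauK Th q p u Hstep Hinf.
  pose proof (mul_le_1_of_le_inv _ tau HK Htau HtauK) as Hsmall.
  assert (Hsteps : forall i,
    Lscheme_step d M s a fw f2 f1 f3 L tau (Th O) (Th i) (Th (S i)) (q (S i)) (p (S i)) (u (S i))).
  { intros i. pose proof (Hstep (S i) ltac:(lia)) as H. replace (S i - 1)%nat with i in H by lia. exact H. }
  assert (HLinf : forall i, Linf_le d M (u (S i)) Mu) by (intros; apply Hinf; lia).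
  assert (HsL : Lip s L) by (apply (Lip_weaken s Ls); auto).
  destruct Hconf as [Hvol _].
  split.
  - intros [|[|m]] Hi; [lia|lia|]. replace (S (S m) - 1)%nat with (S m) by lia.
    replace (S (S m) - 2)%nat with m by lia. unfold normW. rewrite !Rsqr_sqrt by apply ipW_ge0.
    eapply (iterate_bounds d M s a fw f2 f1 f3 L tau C a_lo a_hi Mu Fw La Lfw Lf1 Lf2 Lf3); eauto.
  - destruct (iterates_converge d M s a fw f2 f1 f3 L tau C a_lo a_hi Mu Fw La Lfw Lf1 Lf2 Lf3)
      with (Th := Th) (q := q) (p := p) (u := u) as (Ths & qs & ps & us & HTh & Hq & Hp & Hu); eauto.
    exists Ths, qs, ps, us. split; [|split; [|split; [|split]]].
    + apply normW_sub_cv0; auto.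
    + apply cv_unshift, (normV_sub_cv0 d M (fun i => q (S i))); auto.
    + apply cv_unshift, (normW_sub_cv0 d M (fun i => p (S i))); auto.
    + apply cv_unshift, (normV_sub_cv0 d M (fun i => u (S i))); auto.
    + eapply (limit_solves_Ph_n d M s a fw f2 f1 f3 L tau La Lfw Lf1 Lf2 Lf3); eauto.
Qed.
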